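(* For every $A\in\mathcal A$, the predominated graph $(A,V(A)\setminus X(A))$ is an atomic MBD critical graph.
   Context: For a tree $T$, $S(T)$ is obtained by subdividing each edge of $T$ exactly once; $\mathcal S=\{S(T):T\text{ a tree}\}$ and $X(S(T))=V(T)$ (with $S(P_1)=P_1$, $X(P_1)=V(P_1)$). For an integer $k\ge 2$, the $k$-odd replacement of an edge $xy$ of a graph removes $xy$ and adds $k$ internally vertex-disjoint $x,y$-paths of arbitrary odd lengths. $\mathcal A$ is the smallest family of graphs such that (i) $\mathcal S\subseteq\mathcal A$ (with the given $X$), and (ii) if $A\in\mathcal A$ and $A'$ is obtained from $A$ by a $k$-odd replacement ($k\ge2$) of an edge of $A$, then $A'\in\mathcal A$, with $X(A')$ the bipartition class of the bipartite graph $A'$ containing $X(A)$. A predominated graph is a pair $(G,D)$ with $D\subseteq V(G)$; in the MBD game on $(G,D)$, Staller and Dominator alternately claim unclaimed vertices of $V(G)$ (including those of $D$), Staller first; Staller wins if she claims all of $N_G[v]$ for some $v\in V(G)\setminus D$, Dominator wins otherwise. $(G,D)$ is MBD critical if Staller wins on $(G,D)$ but Dominator wins on $(G,D\cup\{v\})$ for every $v\in V(G)\setminus D$; it is atomic MBD critical if additionally $D$ is independent in $G$ and no vertex of $D$ is isolated in $G$. *)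

(* Graphs are labelled on natural numbers:
   a graph is a finite vertex list V : seq nat together with an adjacency
   relation a : nat -> nat -> Prop (only relating vertices of V). *)
From mathcomp Require Import all_boot.
Set Implicit Arguments. Unset Strict Implicit. Unset Printing Implicit Defensive.

Fixpoint walk (r : nat -> nat -> Prop) (x : nat) (p : seq nat) : Prop :=
  match p with
  | [::] => True
  | y :: q => r x y /\ walk r y q
  end.

Definition is_tree (U : seq nat) (t : nat -> nat -> Prop) : Prop :=
  [/\ (exists x, x \in U),
      (forall x y, t x y -> [/\ x \in U, y \in U, x <> y & t y x]),
      (forall x y, x \in U -> y \in U -> exists p, walk t x p /\ last x p = y)
    & (forall x p, uniq (x :: p) -> 2 <= size p -> walk t x p -> ~ t (last x p) x)].

Definition consec (s : seq nat) (u v : nat) : Prop :=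
  exists i, i.+1 < size s /\ nth 0 s i = u /\ nth 0 s i.+1 = v.

(* The family \mathcal A, as triples (V(A), adjacency of A, X(A)).
   Constructor inA_sub: A = S(T) for a tree (U,t), the subdivision vertex of
   edge xy being labelled m x y (fresh, injective on edges); X = V(T).
   Constructor inA_rep: k-odd replacement (k = size P >= 2) of the edge xy of
   A; the j-th new x,y-path is x :: q_j ++ [:: y] where q_j is the j-th list
   of P (even number of fresh internal vertices, so odd length); X' is the
   bipartition class of A' containing X. *)
Inductive inA : seq nat -> (nat -> nat -> Prop) -> seq nat -> Prop :=
| inA_sub (U : seq nat) (t : nat -> nat -> Prop) (m : nat -> nat -> nat)
    (V : seq nat) (a : nat -> nat -> Prop) (X : seq nat) :
    is_tree U t ->
    (forall x y, t x y -> m x y = m y x) ->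
    (forall x y, t x y -> m x y \notin U) ->
    (forall x y x' y', t x y -> t x' y' -> m x y = m x' y' ->
        (x = x' /\ y = y') \/ (x = y' /\ y = x')) ->
    (forall v, v \in V <-> v \in U \/ exists x y, t x y /\ v = m x y) ->
    (forall u v, a u v <-> exists x y, t x y /\
        ((u = x /\ v = m x y) \/ (u = m x y /\ v = x))) ->
    (forall v, v \in X <-> v \in U) ->
    inA V a X
| inA_rep (V : seq nat) (a : nat -> nat -> Prop) (X : seq nat) (x y : nat)
    (P : seq (seq nat)) (V' : seq nat) (a' : nat -> nat -> Prop) (X' : seq nat) :
    inA V a X ->
    a x y ->
    2 <= size P ->
    (forall q, q \in P -> ~~ odd (size q)) ->
    uniq (flatten P) ->
    (forall v, v \in flatten P -> v \notin V) ->
    count (fun q : seq nat => nilp q) P <= 1 ->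
    (forall v, v \in V' <-> v \in V \/ v \in flatten P) ->
    (forall u v, a' u v <->
       (a u v /\ ~ ((u = x /\ v = y) \/ (u = y /\ v = x))) \/
       exists q, q \in P /\
         (consec (x :: q ++ [:: y]) u v \/ consec (x :: q ++ [:: y]) v u)) ->
    {subset X <= X'} ->
    {subset X' <= V'} ->
    (forall u v, a' u v -> (u \in X' <-> v \notin X')) ->
    inA V' a' X'.

(* Maker-Breaker domination game on the predominated graph ((V,a), D).
   staller_wins V a D S Dm : Staller (to move) can force a win from the
   position where S are Staller's and Dm Dominator's claimed vertices. *)
Definition nbhd_claimed (a : nat -> nat -> Prop) (S : seq nat) (u : nat) : Prop :=
  forall w, (w = u \/ a u w) -> w \in S.

Inductive staller_wins (V : seq nat) (a : nat -> nat -> Prop) (D : seq nat) :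
    seq nat -> seq nat -> Prop :=
| SW_step (S Dm : seq nat) (v : nat) :
    v \in V -> v \notin S -> v \notin Dm ->
    ((exists u, [/\ u \in V, u \notin D & nbhd_claimed a (v :: S) u]) \/
     ((exists w, [/\ w \in V, w \notin v :: S & w \notin Dm]) /\
      (forall w, w \in V -> w \notin v :: S -> w \notin Dm ->
         staller_wins V a D (v :: S) (w :: Dm)))) ->
    staller_wins V a D S Dm.

(* Staller wins on (G, D) (Staller moves first); otherwise Dominator wins. *)
Definition staller_wins_game V a D : Prop := staller_wins V a D [::] [::].

Definition MBD_critical V a D : Prop :=
  staller_wins_game V a D /\
  forall v, v \in V -> v \notin D -> ~ staller_wins_game V a (v :: D).

Definition atomic_MBD_critical V a D : Prop :=
  [/\ MBD_critical V a D,
      (forall u v, u \in D -> v \in D -> ~ a u v)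
    & (forall u, u \in D -> exists w, a u w)].

(* We prove by induction along the construction of A a stronger invariant
   ([critical_bipartite]): A is bipartite with classes X and V \ X, no vertex
   of V \ X is isolated, Staller wins on (A, V \ X), and for every v0 in X
   some matching covers X \ {v0}.  Once v0 is predominated, such a matching
   is a pairing strategy for Dominator.
   On S(T), Staller peels T from a root: claiming the subdivision vertex of the
   parent edge of a farthest remaining vertex forces Dominator to claim that
   vertex, and at the end the root is surrounded.
   After a k-odd replacement of the edge ce (c in X), Staller imitates her
   strategy on A.  On a new path c q_0 ... q_2l-1 e she answers Dominator's
   q_2j+1 by q_2j, reads his q_2j as a move next to c in A, and, once she owns
   e, claims the vertices q_2j from e backwards, each threatening q_2j+1.  So
   whenever her strategy on A surrounds c, c is surrounded in A' as well.
   The matchings are extended along the new paths. *)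
From mathcomp Require Import all_boot zify.
From Stdlib Require Import Classical ClassicalEpsilon Wf_nat.
Set Implicit Arguments. Unset Strict Implicit. Unset Printing Implicit Defensive.

Section StallerWinsInd.
Variables (V : seq nat) (a : nat -> nat -> Prop) (D : seq nat).
Variable P : seq nat -> seq nat -> Prop.
Hypothesis step : forall S M v, v \in V -> v \notin S -> v \notin M ->
  ((exists u, [/\ u \in V, u \notin D & nbhd_claimed a (v :: S) u]) \/
   ((exists w, [/\ w \in V, w \notin v :: S & w \notin M]) /\
    (forall w, w \in V -> w \notin v :: S -> w \notin M ->
       P (v :: S) (w :: M)))) -> P S M.

(* The automatically generated principle gives no induction hypothesis for
   the recursive occurrence nested under the connectives. *)
Fixpoint staller_wins_ind' S M (H : staller_wins V a D S M) {struct H} : P S M :=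
  match H with
  | SW_step S0 M0 v h1 h2 h3 hor =>
    step h1 h2 h3
      (match hor with
       | or_introl h => or_introl h
       | or_intror (conj hex hall) =>
           or_intror (conj hex (fun w x y z => staller_wins_ind' (hall w x y z)))
       end)
  end.
End StallerWinsInd.

Lemma pairing_strategy V a D (pr : nat -> nat -> Prop) :
  (forall p q, pr p q -> pr q p) ->
  (forall p q q', pr p q -> pr p q' -> q = q') ->
  (forall p q, pr p q -> p <> q /\ q \in V) ->
  (forall u, u \in V -> u \notin D ->
     exists p q, [/\ pr p q, p = u \/ a u p & q = u \/ a u q]) ->
  ~ staller_wins_game V a D.
Proof.
move=> pr_sym pr_fun pr_irr pr_cover.
pose safe (S M : seq nat) := (forall z, z \in S -> z \notin M) /\
                 (forall p q, pr p q -> p \in S -> q \in M).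
suff: forall S M, staller_wins V a D S M -> safe S M -> False.
  by move=> H win; apply: (H _ _ win); split.

move=> S0 M0 H; elim/staller_wins_ind': H => S M v vV vS vM win [SM prS].
case: win => [[u [uV uD Nu]]|[[w0 [w0V w0S w0M]] next]].
  have claimed_pair p q : pr p q -> p \in v :: S -> q \in v :: S -> p \in S -> False.
    move=> pq _ /predU1P [Eq pS|qS pS].
      by move: vM; rewrite -Eq (prS _ _ pq pS).
    by move: (SM q qS); rewrite (prS _ _ pq pS).
  have [p [q [pq /Nu Sp /Nu Sq]]] := pr_cover u uV uD.
  have [pS|pS] := boolP (p \in S); first exact: claimed_pair pq Sp Sq pS.
  have [qS|qS] := boolP (q \in S); first exact: claimed_pair (pr_sym _ _ pq) Sq Sp qS.
  move: Sp Sq; rewrite !inE (negbTE pS) (negbTE qS) !orbF => /eqP Ep /eqP Eq.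
  by case: (pr_irr _ _ pq); rewrite Ep Eq.
case: (classic (exists q, [/\ pr v q, q \notin S & q \notin M])) =>
    [[q [vq qS qM]]|nofree].
  have [vq_neq qV] := pr_irr _ _ vq.
  have qvS : q \notin v :: S by rewrite inE negb_or qS andbT; apply/eqP => E; apply: vq_neq.
  apply: (next q qV qvS qM); split.
    move=> z; rewrite !inE => /predU1P [->|zS]; last first.
      by rewrite negb_or (SM z zS) andbT; apply/eqP => E; move: qS; rewrite -E zS.
    by rewrite negb_or vM andbT; apply/eqP.
  move=> p r pr_pr; rewrite !inE => /predU1P [Ep|pS]; last by rewrite (prS _ _ pr_pr pS) orbT.
  by rewrite Ep in pr_pr; rewrite (pr_fun _ _ _ pr_pr vq) eqxx.
apply: (next w0 w0V w0S w0M); split.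
  move=> z; rewrite !inE => /predU1P [->|zS]; last first.
    rewrite negb_or (SM z zS) andbT; apply/eqP => E; move: w0S; by rewrite -E inE zS orbT.
  rewrite negb_or vM andbT; apply/eqP => E; move: w0S; by rewrite -E mem_head.
move=> p r pr_pr; rewrite !inE => /predU1P [Ep|pS]; last by rewrite (prS _ _ pr_pr pS) orbT.
subst p; case: (boolP (r \in M)) => [rM|rM]; first by apply/orP; right.
case: (boolP (r \in S)) => [rS|rS]; first by move: vM; rewrite (prS _ _ (pr_sym _ _ pr_pr) rS).
by case: nofree; exists r.
Qed.

Lemma nth_notin_take (s : seq nat) k : uniq s -> k < size s ->
  nth 0 s k \notin take k s.
Proof.
move=> Hu Hk; move: Hu; rewrite -{1}(cat_take_drop k s) (drop_nth 0 Hk).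
rewrite cat_uniq => /and3P [_ /hasPn H _]; apply: H; exact: mem_head.
Qed.

Section PeelingStrategy.
Variables (V : seq nat) (a : nat -> nat -> Prop) (D us ds : seq nat) (r : nat).
Hypothesis size_ds : size ds = size us.
Hypothesis peel_uniq : uniq (r :: us ++ ds).
Hypotheses (us_V : {subset us <= V}) (ds_V : {subset ds <= V}) (rV : r \in V).
Hypothesis peel_notD : forall u, u \in r :: us -> u \notin D.
Hypothesis us_adj : forall i w, i < size us -> a (nth 0 us i) w -> w \in take i.+1 ds.
Hypothesis r_adj : forall w, a r w -> w \in ds.

Lemma ds_notin_us z : z \in ds -> z \notin us.
Proof.
move: peel_uniq; rewrite /= cat_uniq => /andP [_ /and3P [_ /hasPn disj _]] zds.
by apply/negP => zus; move: (disj z zds); rewrite zus.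
Qed.

Lemma peel_last S M : S =i ds -> M =i us -> staller_wins V a D S M.
Proof.
move: peel_uniq; rewrite /= mem_cat negb_or => /andP [/andP [rus rds] _] ES EM.
apply: (@SW_step _ _ _ _ _ r) => //; [by rewrite ES | by rewrite EM |].
left; exists r; split=> //; first by apply: peel_notD; rewrite mem_head.
by move=> z [->|/r_adj zds]; rewrite inE ?eqxx // ES zds orbT.
Qed.

Lemma peel_round k S M : k < size us -> S =i take k ds -> M =i take k us ->
  (forall S M, S =i take k.+1 ds -> M =i take k.+1 us -> staller_wins V a D S M) ->
  staller_wins V a D S M.
Proof.
move=> k_lt ES EM next.
have k_lt' : k < size ds by rewrite size_ds.
move: peel_uniq; rewrite /= cat_uniq => /andP [_ /and3P [us_uniq _ ds_uniq]].
set d := nth 0 ds k; set u := nth 0 us k.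
have dds : d \in ds by apply: mem_nth.
have uus : u \in us by apply: mem_nth.
have dS : d \notin S by rewrite ES; apply: nth_notin_take.
have uM : u \notin M by rewrite EM; apply: nth_notin_take.
have dM : d \notin M.
  by rewrite EM; apply/negP => /mem_take dus; move: (ds_notin_us dds); rewrite dus.
have uS : u \notin d :: S.
  rewrite inE negb_or ES; apply/andP; split.
    by apply/eqP => ud; move: (ds_notin_us dds); rewrite -ud uus.
  by apply/negP => /mem_take /ds_notin_us; rewrite uus.
apply: (@SW_step _ _ _ _ _ d) => //; first exact: ds_V.
right; split; first by exists u; split=> //; apply: us_V.
move=> w wV wS wM; case: (eqVneq w u) => [->|wu].
  apply: next => z; first by rewrite (take_nth 0 k_lt') mem_rcons !inE ES.
  by rewrite (take_nth 0 k_lt) mem_rcons !inE EM.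
apply: (@SW_step _ _ _ _ _ u) => //; first exact: us_V.
  by rewrite inE negb_or uM andbT eq_sym.
left; exists u; split; [exact: us_V | by apply: peel_notD; rewrite inE uus orbT |].
move=> z [->|/(us_adj k_lt)]; first by rewrite mem_head.
by rewrite (take_nth 0 k_lt') mem_rcons !inE ES => /orP [->|->]; rewrite ?orbT.
Qed.

(* Staller claims [ds] in order; each claim forces Dominator to claim the
   corresponding vertex of [us], and finally [r] is surrounded. *)
Lemma peeling_strategy : staller_wins_game V a D.
Proof.
suff win n k S M : k + n = size us -> S =i take k ds -> M =i take k us ->
    staller_wins V a D S M.
  by apply: (win (size us) 0); rewrite ?take0.
elim: n k S M => [|n IH] k S M k_n ES EM.
  rewrite addn0 in k_n; subst k.
  by apply: peel_last => z; [rewrite ES -size_ds | rewrite EM]; rewrite take_size.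
by apply: (peel_round (k := k)) => //; [lia | move=> S' M'; apply: IH; lia].
Qed.
End PeelingStrategy.
Section Walks.
Variable t : nat -> nat -> Prop.

Lemma walk_cat x (p q : seq nat) :
  walk t x (p ++ q) <-> walk t x p /\ walk t (last x p) q.
Proof.
elim: p x => [|y p IH] x /=; first by split=> // [[]].
rewrite IH; tauto.
Qed.

Lemma walk_take x (p : seq nat) n : walk t x p -> walk t x (take n p).
Proof. by rewrite -{1}(cat_take_drop n p) walk_cat; case. Qed.

Lemma last_take (x : nat) (s : seq nat) i :
  i <= size s -> last x (take i s) = nth x (x :: s) i.
Proof.
elim: s x i => [|y s IH] x [|i] //= Hi.
by rewrite IH ?(set_nth_default x) //=; lia.
Qed.

Lemma last_rev_belast (y : nat) (p : seq nat) : last (last y p) (rev (belast y p)) = y.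
Proof. by case: p => [|z p] //=; rewrite rev_cons last_rcons. Qed.

Lemma belast_take (x : nat) (s : seq nat) i :
  i <= size s -> belast x (take i s) = take i (x :: s).
Proof. by elim: s x i => [|y s IH] x [|i] //= Hi; rewrite IH. Qed.

Hypothesis t_sym : forall x y, t x y -> t y x.

Lemma walk_rev x (p : seq nat) : walk t x p -> walk t (last x p) (rev (belast x p)).
Proof.
elim: p x => [|y p IH] x //= [xy yp].
rewrite rev_cons -cats1 walk_cat; split; first exact: IH.
by rewrite last_rev_belast /=; split=> //; apply: t_sym.
Qed.

(* [s] follows [p] up to the first vertex of [y :: q] lying on [x :: p]
   (position [k] of [x :: p], position [i] of [y :: q]), then [q] backwards. *)
Lemma walk_join x y (p q : seq nat) :
  walk t x p -> walk t y q -> last x p = last y q ->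
  uniq (x :: p) -> uniq (y :: q) ->
  exists k i s, [/\ k <= size p /\ i <= size q,
    nth 0 (x :: p) k = nth 0 (y :: q) i, size s = k + i,
    walk t x s & last x s = y /\ uniq (x :: s)].
Proof.
move=> xp yq pq_last xp_uniq yq_uniq.
have meet : has (mem (x :: p)) (y :: q).
  by apply/hasP; exists (last y q); [exact: mem_last | rewrite /= -pq_last; exact: mem_last].
set i := find (mem (x :: p)) (y :: q).
have i_lt : i < size (y :: q) by rewrite -has_find.
set z := nth 0 (y :: q) i.
have z_in : z \in x :: p by exact: (nth_find 0 meet).
set k := index z (x :: p).
have k_lt : k < size (x :: p) by rewrite index_mem.
have kz : nth 0 (x :: p) k = z by apply: nth_index.
have k_le : k <= size p by rewrite -ltnS.
exists k, i, (take k p ++ rev (take i (y :: q))); split.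
- by split; rewrite -ltnS.
- exact: kz.
- by rewrite size_cat size_rev !size_take_min (minn_idPl k_le) (minn_idPl (ltnW i_lt)).
- rewrite walk_cat; split; first exact: walk_take.
  rewrite (last_take _ k_le) (set_nth_default 0) // kz.
  have i_le : i <= size q by rewrite -ltnS.
  have := walk_rev (walk_take i yq).
  by rewrite (last_take _ i_le) belast_take // (set_nth_default 0).
- split.
    rewrite last_cat (last_take _ k_le) (set_nth_default 0) // kz.
    by rewrite /z; case: (i) => [|j] //=; rewrite rev_cons last_rcons.
  rewrite -cat_cons cat_uniq rev_uniq; apply/and3P; split.
  + by rewrite -[x :: take k p]/(take k.+1 (x :: p)) take_uniq.
  + apply/hasPn => v; rewrite mem_rev => v_in.
    have vi : index v (take i (y :: q)) < i.
      by move: v_in; rewrite -index_mem size_take_min => /leq_trans; apply; exact: geq_minl.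
    have := before_find 0 vi; rewrite -(nth_take _ vi) nth_index //= => /negbT v_notin.
    apply: contra v_notin; rewrite !inE => /predU1P [->|/mem_take ->];
      by rewrite ?eqxx ?orbT.
  + exact: take_uniq.
Qed.
End Walks.

Section Tree.
Variables (U : seq nat) (t : nat -> nat -> Prop) (r : nat).
Hypothesis tree : is_tree U t.
Hypothesis rU : r \in U.

Lemma tree_adj_in x y : t x y -> x \in U /\ y \in U.
Proof. by case: tree => _ H _ _ /H []. Qed.

Lemma tree_adj_sym x y : t x y -> t y x.
Proof. by case: tree => _ H _ _ /H []. Qed.

Lemma tree_adj_neq x y : t x y -> x <> y.
Proof. by case: tree => _ H _ _ /H []. Qed.

Definition reaches_root x n := exists p, [/\ walk t x p, last x p = r & size p = n].

Definition dist x :=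
  epsilon (inhabits 0) (fun n => reaches_root x n /\ forall m, reaches_root x m -> n <= m).

Lemma distP x : x \in U ->
  reaches_root x (dist x) /\ forall m, reaches_root x m -> dist x <= m.
Proof.
move=> xU; apply: (epsilon_spec (inhabits 0)
  (fun n => reaches_root x n /\ forall m, reaches_root x m -> n <= m)).
have [|n [[Hn n_min] _]] :=
  @dec_inh_nat_subset_has_unique_least_element (reaches_root x) (fun n => classic _).
- case: tree => _ _ connected _; have [p [xp p_last]] := connected x r xU rU.
  by exists (size p), p.
by exists n; split=> // m /n_min /leP.
Qed.

Lemma dist_root : dist r = 0.
Proof. by apply/eqP; rewrite -leqn0; apply: (proj2 (distP rU)); exists [::]. Qed.

Lemma dist_eq0 x : x \in U -> dist x = 0 -> x = r.
Proof.
move=> xU dx; have [[p [_ p_last p_size]] _] := distP xU.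
by move: p_size p_last; rewrite dx; case: p.
Qed.

Lemma dist_adj x y : t x y -> dist x <= (dist y).+1.
Proof.
move=> xy; have [xU yU] := tree_adj_in xy.
have [[p [yp p_last p_size]] _] := distP yU.
by apply: (proj2 (distP xU)); exists (y :: p); rewrite /= p_size.
Qed.

Definition parent x := epsilon (inhabits 0) (fun y => t x y /\ (dist y).+1 = dist x).

Lemma parentP x : x \in U -> x != r -> t x (parent x) /\ (dist (parent x)).+1 = dist x.
Proof.
move=> xU xr.
apply: (epsilon_spec (inhabits 0) (fun y => t x y /\ (dist y).+1 = dist x)).
have [[[|y p] [/= xp p_last p_size]] _] := distP xU; first by rewrite p_last eqxx in xr.
case: xp => xy yp; exists y; split=> //.
have [_ yU] := tree_adj_in xy.
have := proj2 (distP yU) (size p) (ex_intro _ p (And3 yp p_last erefl)).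
by have := dist_adj xy; rewrite -p_size /=; lia.
Qed.

Fixpoint root_path n x := if n is n'.+1 then parent x :: root_path n' (parent x) else [::].

Lemma root_pathP n x : x \in U -> dist x = n ->
  [/\ walk t x (root_path n x), last x (root_path n x) = r,
      size (root_path n x) = n, uniq (x :: root_path n x)
    & forall z, z \in root_path n x -> dist z < n].
Proof.
elim: n x => [|n IH] x xU dx; first by rewrite (dist_eq0 xU dx).
have xr : x != r by apply: contra_eqN dx => /eqP ->; rewrite dist_root.
have [xy dy] := parentP xU xr; have [_ yU] := tree_adj_in xy.
have [yp p_last p_size p_uniq p_dist] := IH _ yU ltac:(lia).
split=> //=; first by rewrite p_size.
  apply/andP; split; last exact: p_uniq.
  rewrite inE negb_or; apply/andP; split.
    by apply/eqP => E; move: dy; rewrite -E; lia.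
  by apply/negP => /p_dist; lia.
by move=> z; rewrite inE => /predU1P [->|/p_dist]; lia.
Qed.

Lemma tree_adj_parent u w : t u w -> (u != r /\ parent u = w) \/ (w != r /\ parent w = u).
Proof.
move=> uw; have [uU wU] := tree_adj_in uw.
have [up u_last u_size u_uniq _] := root_pathP uU (erefl _).
have [wp w_last w_size w_uniq _] := root_pathP wU (erefl _).
have [k [i [s [[k_le i_le] meet s_size s_walk [s_last s_uniq]]]]] :=
  walk_join tree_adj_sym up wp (etrans u_last (esym w_last)) u_uniq w_uniq.
have short : size s < 2.
  rewrite ltnNge; apply/negP => long; case: tree => _ _ _ acyclic.
  by apply: (acyclic u s s_uniq long s_walk); rewrite s_last; apply: tree_adj_sym.
have step x : x \in U -> 0 < size (root_path (dist x) x) ->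
    x != r /\ nth 0 (x :: root_path (dist x) x) 1 = parent x.
  move=> xU; case E: (dist x) => [|n] //= _.
  by split=> //; apply: contra_eqN E => /eqP ->; rewrite dist_root.
move: short meet k_le i_le; rewrite s_size; clear s_size.
case: k i => [|[|k]] [|[|i]] //= _ meet k_le i_le.
- by move/tree_adj_neq: uw.
- by have [wr <-] := step w wU i_le; right.
- by have [ur <-] := step u uU k_le; left.
Qed.
End Tree.

Definition predominated (V X : seq nat) := [seq v <- V | v \notin X].

Definition near_perfect_matching (a : nat -> nat -> Prop) (X : seq nat) (v0 : nat)
    (mt : nat -> nat -> Prop) :=
  [/\ (forall u d, mt u d -> a u d /\ u \in X),
      (forall u d d', mt u d -> mt u d' -> d = d'),
      (forall u u' d, mt u d -> mt u' d -> u = u')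
    & (forall u, u \in X -> u != v0 -> exists d, mt u d)].

Record critical_bipartite (V : seq nat) (a : nat -> nat -> Prop) (X : seq nat) : Prop := {
  adj_sym : forall u v, a u v -> a v u;
  adj_in : forall u v, a u v -> u \in V /\ v \in V;
  adj_bipartite : forall u v, a u v -> (u \in X) = (v \notin X);
  predominated_nonisolated : forall u, u \in V -> u \notin X -> exists w, a u w;
  staller_wins_critical : staller_wins_game V a (predominated V X);
  near_perfect : forall v0, v0 \in X -> exists mt, near_perfect_matching a X v0 mt
}.
Arguments adj_sym {V a X} _ [u v].
Arguments adj_in {V a X} _ [u v].
Arguments adj_bipartite {V a X} _ [u v].
Arguments predominated_nonisolated {V a X} _ [u].
Arguments near_perfect {V a X} _ [v0].

Section Subdivision.
Variables (U : seq nat) (t : nat -> nat -> Prop) (m : nat -> nat -> nat)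
  (V : seq nat) (a : nat -> nat -> Prop) (X : seq nat).
Hypothesis tree : is_tree U t.
Hypothesis m_sym : forall x y, t x y -> m x y = m y x.
Hypothesis m_fresh : forall x y, t x y -> m x y \notin U.
Hypothesis m_inj : forall x y x' y', t x y -> t x' y' -> m x y = m x' y' ->
  (x = x' /\ y = y') \/ (x = y' /\ y = x').
Hypothesis V_def : forall v, v \in V <-> v \in U \/ exists x y, t x y /\ v = m x y.
Hypothesis a_def : forall u v, a u v <-> exists x y, t x y /\
  ((u = x /\ v = m x y) \/ (u = m x y /\ v = x)).
Hypothesis X_def : forall v, v \in X <-> v \in U.

Lemma sub_tree_vertex u : u \in U -> u \in V.
Proof. by move=> uU; apply/V_def; left. Qed.

Lemma sub_mid_vertex x y : t x y -> m x y \in V.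
Proof. by move=> xy; apply/V_def; right; exists x, y. Qed.

Lemma sub_adj_tree_vertex u w : u \in U -> a u w -> exists y, t u y /\ w = m u y.
Proof.
move=> uU /a_def [x [y [xy [[-> ->]|[E _]]]]]; first by exists y.
by move: (m_fresh xy); rewrite -E uU.
Qed.

Lemma sub_tree_vertex_not_predominated u : u \in U -> u \notin predominated V X.
Proof. by move=> /X_def uX; rewrite mem_filter uX. Qed.

Lemma sub_parent_mid_inj r u u' : r \in U -> u \in U -> u != r -> u' \in U -> u' != r ->
  m u (parent t r u) = m u' (parent t r u') -> u = u'.
Proof.
move=> rU uU ur u'U u'r E.
have [up du] := parentP tree rU uU ur; have [u'p du'] := parentP tree rU u'U u'r.
case: (m_inj up u'p E) => [[]//|[E1 E2]].
by move: du du'; rewrite -E1 E2; lia.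
Qed.

Section PeelOrder.
Variables (r : nat).
Hypothesis rU : r \in U.

(* Tree vertices other than [r], farthest from [r] first; Staller claims the
   midpoints of their parent edges in this order. *)
Definition peel_order :=
  sort (fun x y => dist t r y <= dist t r x) [seq x <- undup U | x != r].

Definition peel_claims := [seq m u (parent t r u) | u <- peel_order].

Lemma mem_peel_order u : (u \in peel_order) = (u \in U) && (u != r).
Proof. by rewrite mem_sort mem_filter mem_undup andbC. Qed.

Lemma peel_claims_fresh d : d \in peel_claims -> d \notin U.
Proof.
move=> /mapP [u]; rewrite mem_peel_order => /andP [uU ur] ->.
by apply: m_fresh; case: (parentP tree rU uU ur).
Qed.

Lemma peel_order_adj i y : i < size peel_order -> t (nth 0 peel_order i) y ->
  m (nth 0 peel_order i) y \in take i.+1 peel_claims.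
Proof.
move=> i_lt uy; set u := nth 0 peel_order i in uy *.
have size_claims : size peel_claims = size peel_order by rewrite size_map.
case: (tree_adj_parent tree rU uy) => [[_ Ep]|[yr Ep]].
  by rewrite (take_nth 0) ?size_claims // mem_rcons inE (nth_map 0) // Ep eqxx.
have [_ yU] := tree_adj_in tree uy.
have [_ dy] := parentP tree rU yU yr; rewrite Ep in dy.
have y_in : y \in peel_order by rewrite mem_peel_order yU yr.
set j := index y peel_order.
have j_lt : j < size peel_order by rewrite index_mem.
have jy : nth 0 peel_order j = y by apply: nth_index.
have ji : j < i.
  rewrite ltnNge leq_eqVlt; apply/negP => /orP [/eqP E|ij].
    by apply: (tree_adj_neq tree uy); rewrite -jy -E.
  have sorted_order : sorted (fun x y => dist t r y <= dist t r x) peel_order.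
    by apply: sort_sorted => x z; apply: leq_total.
  have := sorted_ltn_nth (fun x y z xy yz => leq_trans yz xy) 0 sorted_order i j i_lt j_lt ij.
  by rewrite /= jy -/u -dy; lia.
have -> : m u y = nth 0 peel_claims j by rewrite (nth_map 0) // jy Ep m_sym.
rewrite -(nth_take 0 (leqW ji)); apply: mem_nth.
by rewrite size_take_min size_claims leq_min (leqW ji) j_lt.
Qed.

Lemma root_adj_peel_claims w : a r w -> w \in peel_claims.
Proof.
move=> /(sub_adj_tree_vertex rU) [y [ry ->]].
case: (tree_adj_parent tree rU ry) => [[]|[yr Ep]]; first by rewrite eqxx.
have [_ yU] := tree_adj_in tree ry.
by rewrite m_sym //; apply/mapP; exists y; rewrite ?mem_peel_order ?yU ?Ep.
Qed.
End PeelOrder.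

Lemma subdivision_staller_wins : staller_wins_game V a (predominated V X).
Proof.
case: (tree) => [[r rU] _ _ _].
apply: (@peeling_strategy V a _ (peel_order r) (peel_claims r) r).
- by rewrite size_map.
- have claims_order d : d \in peel_claims r -> d \notin peel_order r.
    by move=> /(peel_claims_fresh rU); apply: contra; rewrite mem_peel_order => /andP [].
  rewrite /= mem_cat negb_or mem_peel_order eqxx andbF /= cat_uniq.
  rewrite (contraTN (@peel_claims_fresh r rU r) rU) sort_uniq filter_uniq ?undup_uniq //=.
  apply/andP; split; first by apply/hasPn => d /claims_order.
  rewrite map_inj_in_uniq ?sort_uniq ?filter_uniq ?undup_uniq //.
  move=> u u'; rewrite !mem_peel_order => /andP [uU ur] /andP [u'U u'r].
  exact: sub_parent_mid_inj.
- by move=> u; rewrite mem_peel_order => /andP [uU _]; apply: sub_tree_vertex.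
- move=> d /mapP [u]; rewrite mem_peel_order => /andP [uU ur] ->.
  by apply: sub_mid_vertex; case: (parentP tree rU uU ur).
- exact: sub_tree_vertex.
- move=> u; rewrite inE => /predU1P [->|]; first exact: sub_tree_vertex_not_predominated.
  by rewrite mem_peel_order => /andP [uU _]; apply: sub_tree_vertex_not_predominated.
- move=> i w i_lt /(sub_adj_tree_vertex _) [|y [uy ->]]; last exact: peel_order_adj.
  by have := mem_nth 0 i_lt; rewrite mem_peel_order => /andP [].
- exact: root_adj_peel_claims.
Qed.

Lemma subdivision_critical : critical_bipartite V a X.
Proof.
have adj_in u v : a u v -> u \in V /\ v \in V.
  move=> /a_def [x [y [xy [[-> ->]|[-> ->]]]]]; have [xU _] := tree_adj_in tree xy;
  by split; first [exact: sub_tree_vertex | exact: sub_mid_vertex].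
split=> //.
- move=> u v /a_def [x [y [xy uv]]]; apply/a_def; exists x, y; split=> //; tauto.
- have mX x y : t x y -> m x y \notin X by move=> /m_fresh; apply: contra => /X_def.
  move=> u v /a_def [x [y [xy [[-> ->]|[-> ->]]]]]; have [/X_def xX _] := tree_adj_in tree xy;
    by rewrite xX (negbTE (mX _ _ xy)).
- move=> u /V_def [uU|[x [y [xy ->]]]] uX; first by move/X_def: uU; rewrite (negbTE uX).
  by exists x; apply/a_def; exists x, y; split=> //; right.
- exact: subdivision_staller_wins.
move=> v0 /X_def v0U.
exists (fun u d => [/\ u \in U, u != v0 & d = m u (parent t v0 u)]); split.
- move=> u d [uU uv0 ->]; have [up _] := parentP tree v0U uU uv0.
  by split; [apply/a_def; exists u, (parent t v0 u); split=> //; left|apply/X_def].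
- by move=> u d d' [_ _ ->] [_ _ ->].
- by move=> u u' d [uU uv0 ->] [u'U u'v0 E]; apply: (sub_parent_mid_inj v0U uU uv0 u'U u'v0).
- by move=> u /X_def uU uv0; exists (m u (parent t v0 u)).
Qed.
End Subdivision.

Lemma near_perfect_matching_dominator_wins V a X v0 mt :
  critical_bipartite V a X -> near_perfect_matching a X v0 mt ->
  ~ staller_wins_game V a (v0 :: predominated V X).
Proof.
move=> crit [mt_adj mt_fun mt_inj mt_total].
have mt_neq u d : mt u d -> u <> d.
  by move=> /mt_adj [ud uX] E; move: (adj_bipartite crit ud); rewrite -E uX.
apply: (pairing_strategy (pr := fun p q => mt p q \/ mt q p)).
- by move=> p q [pq|qp]; [right|left].
- move=> p q q' [pq|qp] [pq'|q'p].
  + exact: mt_fun pq pq'.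
  + have [_ pX] := mt_adj _ _ pq; have [q'p_adj q'X] := mt_adj _ _ q'p.
    by move: (adj_bipartite crit q'p_adj); rewrite q'X pX.
  + have [_ pX] := mt_adj _ _ pq'; have [qp_adj qX] := mt_adj _ _ qp.
    by move: (adj_bipartite crit qp_adj); rewrite qX pX.
  + exact: mt_inj qp q'p.
- move=> p q [pq|qp].
    by split; [exact: mt_neq|case: (adj_in crit (proj1 (mt_adj _ _ pq)))].
  split; first by move=> E; apply: (mt_neq _ _ qp).
  by case: (adj_in crit (proj1 (mt_adj _ _ qp))).
move=> u uV; rewrite inE negb_or mem_filter uV andbT negbK => /andP [uv0 uX].
have [d ud] := mt_total u uX uv0.
by exists u, d; split; [left|left|right; case: (mt_adj _ _ ud)].
Qed.

Definition route (c e : nat) (q : seq nat) := c :: q ++ [:: e].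

Lemma route_nthS c e q i : i < size q -> nth 0 (route c e q) i.+1 = nth 0 q i.
Proof. by move=> Hi; rewrite /route /= nth_cat Hi. Qed.

Lemma route_nth_last c e q : nth 0 (route c e q) (size q).+1 = e.
Proof. by rewrite /route /= nth_cat ltnn subnn. Qed.

Lemma mem_flatten_nth (P : seq (seq nat)) q i :
  q \in P -> i < size q -> nth 0 q i \in flatten P.
Proof. by move=> Hq Hi; apply/flattenP; exists q => //; apply: mem_nth. Qed.

Lemma count_sub_lt (s : seq nat) (p p' : pred nat) :
  (forall z, p' z -> p z) -> (exists z, [/\ z \in s, p z & ~~ p' z]) ->
  count p' s < count p s.
Proof.
move=> Hsub; elim: s => [|y s IH] [z [Hz Hp Hp']] //=.
have Hc : count p' s <= count p s by apply: sub_count => x /Hsub.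
move: Hz; rewrite inE => /orP [/eqP E|Hz].
  subst y; rewrite (negbTE Hp') Hp /=; by rewrite add0n add1n ltnS.
have := IH (ex_intro _ z (And3 Hz Hp Hp')).
case: (p' y) (Hsub y) => [->//|_]; case: (p y) => /=; lia.
Qed.

(* The game on A' is only accessed through these consequences of the
   replacement of the edge [c e] by the routes [route c e q], [q \in P]. *)
Section Simulation.
Variables (V : seq nat) (a : nat -> nat -> Prop) (X : seq nat).
Variables (V' : seq nat) (a' : nat -> nat -> Prop) (X' : seq nat).
Variables (c e : nat) (P : seq (seq nat)).
Hypothesis a_in : forall u v, a u v -> u \in V /\ v \in V.
Hypothesis a_bip : forall u v, a u v -> (u \in X) = (v \notin X).
Hypothesis ce_adj : a c e.
Hypothesis cX : c \in X.
Hypothesis V_sub : forall v, v \in V -> v \in V'.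
Hypothesis new_in_V : forall v, v \in flatten P -> v \in V'.
Hypothesis V_split : forall v, v \in V' -> v \in V \/ v \in flatten P.
Hypothesis new_fresh : forall v, v \in flatten P -> v \notin V.
Hypothesis new_pos_inj : forall q q' i i', q \in P -> q' \in P -> i < size q -> i' < size q' ->
  nth 0 q i = nth 0 q' i' -> q = q' /\ i = i'.
Hypothesis new_pos : forall z, z \in flatten P ->
  exists q i, [/\ q \in P, i < size q & z = nth 0 q i].
Hypothesis paths_even : forall q, q \in P -> ~~ odd (size q).
Hypothesis X_sub : {subset X <= X'}.
Hypothesis adj_old : forall u w, u \in V -> u != c -> u != e -> a' u w -> a u w.
Hypothesis adj_c : forall w, a' c w ->
  (a c w /\ w != e) \/ w = e \/ exists q, [/\ q \in P, 0 < size q & w = nth 0 q 0].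
Hypothesis adj_path : forall q i w, q \in P -> i < size q -> a' (nth 0 q i) w ->
  w = nth 0 (route c e q) i \/ w = nth 0 (route c e q) i.+2.
Hypothesis path_class : forall q i, q \in P -> i < size q -> (nth 0 q i \in X') = odd i.

Lemma c_in : c \in V. Proof. by case: (a_in ce_adj). Qed.

Lemma e_in : e \in V. Proof. by case: (a_in ce_adj). Qed.

Lemma e_notin : e \notin X. Proof. by rewrite -(a_bip ce_adj). Qed.

Lemma c_neq_e : c != e. Proof. by apply/eqP => E; move: e_notin; rewrite -E cX. Qed.

Lemma path_notin_V q i : q \in P -> i < size q -> nth 0 q i \notin V.
Proof. by move=> Hq Hi; apply: new_fresh; apply/flattenP; exists q => //; apply: mem_nth. Qed.

Lemma path_neq_old q i z : q \in P -> i < size q -> z \in V -> nth 0 q i != z.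
Proof. by move=> Hq Hi Hz; apply/eqP => E; move: (path_notin_V Hq Hi); rewrite E Hz. Qed.

Definition unclaimed (S M : seq nat) : pred nat := fun z => (z \notin S) && (z \notin M).
Definition num_unclaimed S M := count (unclaimed S M) V'.
Definition c_blocked (M : seq nat) := exists z, (z = c \/ a c z) /\ z \in M.
Definition pair_ok (S' M' : seq nat) q j :=
  (unclaimed S' M' (nth 0 q j.*2) && unclaimed S' M' (nth 0 q j.*2.+1)) ||
  ((nth 0 q j.*2 \in S') && (nth 0 q j.*2.+1 \in M')).

(* [(S', M')] is the position on A' and [(S, M)] an imagined position on A in
   which Staller follows her winning strategy; Dominator's imagined moves may
   differ from his real ones.  While
   Dominator has not touched the closed neighbourhood of [c] in A
   ([c_blocked]), every pair of consecutive new vertices [q_2j, q_2j+1] on a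
   path is free or answered, so that claiming that neighbourhood in A lets
   Staller claim the closed neighbourhood of [c] in A' as well. *)
Record sim_inv (S' M' S M : seq nat) : Prop := SimInv {
  imag_disjoint : forall z, z \in S -> z \notin M;
  staller_old : forall z, z \in V -> z != c -> z != e -> (z \in S') = (z \in S);
  dominator_old : forall z, z \in V -> z != c -> z != e -> z \in M' -> z \in M;
  staller_ce : (c \in S') + (e \in S') = (c \in S) + (e \in S);
  unclaimed_ce : unclaimed S M c + unclaimed S M e <= unclaimed S' M' c + unclaimed S' M' e;
  dominator_e : e \in M' -> e \in M;
  staller_e : e \in S -> e \in S';
  staller_e_first : (c \in S) || (e \in S) -> ~ c_blocked M -> e \in S';
  pairs_ok : ~ c_blocked M -> forall q j, q \in P -> j.*2.+1 < size q -> pair_ok S' M' q j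
}.

Lemma c_blocked_cons z M : c_blocked M -> c_blocked (z :: M).
Proof. by move=> [x [Hx HxM]]; exists x; split=> //; rewrite inE HxM orbT. Qed.

Lemma pair_ok_consS S' M' q j x :
  x != nth 0 q j.*2 -> x != nth 0 q j.*2.+1 ->
  pair_ok (x :: S') M' q j = pair_ok S' M' q j.
Proof.
move=> H1 H2.
by rewrite /pair_ok /unclaimed !inE ![nth _ _ _ == x]eq_sym (negbTE H1) (negbTE H2).
Qed.

Lemma pair_ok_consM S' M' q j y :
  y != nth 0 q j.*2 -> y != nth 0 q j.*2.+1 ->
  pair_ok S' (y :: M') q j = pair_ok S' M' q j.
Proof.
move=> H3 H4.
by rewrite /pair_ok /unclaimed !inE ![nth _ _ _ == y]eq_sym (negbTE H3) (negbTE H4).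
Qed.

Lemma pair_vertex_neq q q' j j' k k' : q \in P -> q' \in P ->
  j.*2.+1 < size q -> j'.*2.+1 < size q' -> ~~ ((q' == q) && (j' == j)) ->
  (k = j.*2 \/ k = j.*2.+1) -> (k' = j'.*2 \/ k' = j'.*2.+1) ->
  nth 0 q k != nth 0 q' k'.
Proof.
move=> Hq Hq' Hj Hj' Hne Hk Hk'; apply/eqP => E.
have [||E1 E2] := new_pos_inj Hq Hq' _ _ E.
- by case: Hk => ->; lia.
- by case: Hk' => ->; lia.
subst q'; move: Hne; rewrite eqxx /=; apply/negP; rewrite negbK; apply/eqP.
subst k'; clear -Hk Hk'; lia.
Qed.

Lemma unclaimed_consM S M z x : (unclaimed S (z :: M) x <= unclaimed S M x)%N.
Proof. by rewrite /unclaimed inE negb_or; case: (x == z); case: (x \in S); case: (x \in M). Qed.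

Lemma unclaimed_consM_neq S M z x : x != z -> unclaimed S (z :: M) x = unclaimed S M x.
Proof. by rewrite /unclaimed inE => /negbTE ->. Qed.

Lemma unclaimed_consS_neq S M z x : x != z -> unclaimed (z :: S) M x = unclaimed S M x.
Proof. by rewrite /unclaimed inE => /negbTE ->. Qed.

Lemma unclaimed_consM_eq S M x : unclaimed S (x :: M) x = false.
Proof. by rewrite /unclaimed mem_head andbF. Qed.

Lemma unclaimed_consS_eq S M x : unclaimed (x :: S) M x = false.
Proof. by rewrite /unclaimed mem_head. Qed.

Lemma sim_inv_pair S' M' S M q j : sim_inv S' M' S M -> q \in P -> j.*2.+1 < size q ->
  unclaimed S' M' (nth 0 q j.*2) -> unclaimed S' M' (nth 0 q j.*2.+1) ->
  sim_inv (nth 0 q j.*2 :: S') (nth 0 q j.*2.+1 :: M') S M.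
Proof.
move=> [SM S_old M_old S_ce free_ce M_e S_e S_e1 pairs] Hq Hj Hfp Hfv.
have Hj0 : j.*2 < size q by apply: ltnW.
set pp := nth 0 q j.*2 in Hfp *; set vv := nth 0 q j.*2.+1 in Hfv *.
have Hnp : forall z, z \in V -> (z == pp) = false.
  by move=> z Hz; apply/negbTE; rewrite eq_sym; apply: path_neq_old.
have Hnv : forall z, z \in V -> (z == vv) = false.
  by move=> z Hz; apply/negbTE; rewrite eq_sym; apply: path_neq_old.
have Hc := Hnp _ c_in; have He := Hnp _ e_in; have Hc' := Hnv _ c_in; have He' := Hnv _ e_in.
split=> //.
- by move=> z Hz Hzc Hze; rewrite inE Hnp // S_old.
- by move=> z Hz Hzc Hze; rewrite inE Hnv //; apply: M_old.
- by rewrite !inE Hc He.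
- by rewrite /unclaimed !inE Hc He Hc' He'.
- by rewrite inE He'; apply: M_e.
- by move=> /S_e; rewrite inE => ->; rewrite orbT.
- by move=> H1 H2; rewrite inE S_e1 // orbT.
move=> Hnd q' j' Hq' Hj'.
case: (boolP ((q' == q) && (j' == j))) => [/andP [/eqP -> /eqP ->]|Hne].
  by rewrite /pair_ok !mem_head !andbT orbT.
rewrite pair_ok_consS ?pair_ok_consM; try exact: pairs.
all: apply: pair_vertex_neq Hq Hq' Hj Hj' Hne _ _; first [by left | by right].
Qed.

Lemma sim_inv_dom_old S' M' S M w z : sim_inv S' M' S M ->
  w \in V -> w != c -> w != e -> z \in V -> unclaimed S M z -> w \in z :: M ->
  sim_inv S' (w :: M') S (z :: M).
Proof.
move=> [SM S_old M_old S_ce free_ce M_e S_e S_e1 pairs] Hw Hwc Hwe Hz /andP [HzS HzM] HwzM.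
split=> //.
- move=> x Hx; rewrite inE negb_or SM // andbT; apply/eqP => E; move: HzS; by rewrite -E Hx.
- move=> x Hx Hxc Hxe; rewrite inE => /orP [/eqP ->//|/M_old]; rewrite inE => -> //; by rewrite orbT.
- rewrite (unclaimed_consM_neq S' M' (x:=c)) 1?eq_sym // (unclaimed_consM_neq S' M' (x:=e)) 1?eq_sym //.
  apply: leq_trans free_ce; apply: leq_add; exact: unclaimed_consM.
- by rewrite inE eq_sym (negbTE Hwe) /= => /M_e H; rewrite inE H orbT.
- by move=> H1 H2; apply: S_e1 => // H3; apply: H2; apply: c_blocked_cons.
- move=> Hnd q j Hq Hj; rewrite pair_ok_consM //.
    by apply: pairs => // H3; apply: Hnd; apply: c_blocked_cons.
  + by rewrite eq_sym; apply: path_neq_old Hq (ltnW Hj) Hw.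
  + by rewrite eq_sym; apply: path_neq_old Hq Hj Hw.
Qed.

Lemma unclaimed_ce_consM S M z : (z = c \/ z = e) -> unclaimed S M z ->
  (unclaimed S (z :: M) c + unclaimed S (z :: M) e).+1 = (unclaimed S M c + unclaimed S M e)%N.
Proof.
have Hce0 := c_neq_e; have Hec : e != c by rewrite eq_sym.
case=> -> Hf.
  by rewrite unclaimed_consM_eq unclaimed_consM_neq // Hf.
by rewrite unclaimed_consM_eq unclaimed_consM_neq // Hf addn1 addnC.
Qed.

Lemma unclaimed_ce_consS S M z : (z = c \/ z = e) -> unclaimed S M z ->
  (unclaimed (z :: S) M c + unclaimed (z :: S) M e).+1 = (unclaimed S M c + unclaimed S M e)%N.
Proof.
have Hce0 := c_neq_e; have Hec : e != c by rewrite eq_sym.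
case=> -> Hf.
  by rewrite unclaimed_consS_eq unclaimed_consS_neq // Hf.
by rewrite unclaimed_consS_eq unclaimed_consS_neq // Hf addn1 addnC.
Qed.

Lemma claimed_ce_consS (S : seq nat) z : (z = c \/ z = e) -> z \notin S ->
  ((c \in z :: S) + (e \in z :: S) = ((c \in S) + (e \in S)).+1)%N.
Proof.
have Hce0 := c_neq_e; have Hec : e != c by rewrite eq_sym.
case=> -> Hz; rewrite !inE eqxx (negbTE Hz) /=.
  by rewrite (negbTE Hec).
by rewrite (negbTE Hce0) addn1 addnC.
Qed.

Lemma unclaimed_ce0_consM S M z : (unclaimed S M c + unclaimed S M e = 0)%N ->
  (unclaimed S (z :: M) c + unclaimed S (z :: M) e = 0)%N.
Proof.
move=> H; apply/eqP; rewrite -leqn0; rewrite -H.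
by apply: leq_add; apply: unclaimed_consM.
Qed.

Lemma sim_inv_dom_ce S' M' S M w z : sim_inv S' M' S M -> (w = c \/ w = e) ->
  unclaimed S' M' w -> z \in V -> unclaimed S M z -> (w = e -> unclaimed S M e -> z = e) ->
  ((unclaimed S M c + unclaimed S M e = 0)%N \/ z = c \/ z = e) ->
  sim_inv S' (w :: M') S (z :: M).
Proof.
move=> [SM S_old M_old S_ce free_ce M_e S_e S_e1 pairs] Hw Hfw Hz Hfz Hze Hzce.
have HwV : w \in V by case: Hw => ->; [apply: c_in|apply: e_in].
move: (Hfz) => /andP [HzS HzM].
split=> //.
- move=> x Hx; rewrite inE negb_or SM // andbT; apply/eqP => E; move: HzS; by rewrite -E Hx.
- move=> x Hx Hxc Hxe; rewrite inE => /orP [/eqP E|/(M_old x Hx Hxc Hxe) H].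
    by case: Hw E => -> E; [move: Hxc|move: Hxe]; rewrite E eqxx.
  by apply/orP; right.
- have HA' := unclaimed_ce_consM Hw Hfw.
  case: Hzce => [H0|Hzce].
    by rewrite (unclaimed_ce0_consM z H0).
  have HA := unclaimed_ce_consM Hzce Hfz.
  by move: free_ce; rewrite -HA -HA' ltnS.
- rewrite inE => /orP [/eqP Ee|/M_e H]; last by rewrite inE H orbT.
  case: (boolP (unclaimed S M e)) => [He|].
    by rewrite -Ee in Hfw; rewrite Hze // ?mem_head.
  rewrite /unclaimed negb_and !negbK => /orP [HeS|HeM]; last by rewrite inE HeM orbT.
  by move: Hfw; rewrite -Ee /unclaimed (S_e HeS).
- by move=> H1 H2; apply: S_e1 => // H3; apply: H2; apply: c_blocked_cons.
- move=> Hnd q j Hq Hj; rewrite pair_ok_consM //.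
  + by apply: pairs => // H3; apply: Hnd; apply: c_blocked_cons.
  + by rewrite eq_sym; apply: path_neq_old Hq (ltnW Hj) HwV.
  + by rewrite eq_sym; apply: path_neq_old Hq Hj HwV.
Qed.

Lemma sim_inv_dom_path S' M' S M w z : sim_inv S' M' S M -> w \in flatten P ->
  z \in V -> unclaimed S M z -> (c_blocked M \/ z = c \/ a c z) -> sim_inv S' (w :: M') S (z :: M).
Proof.
move=> [SM S_old M_old S_ce free_ce M_e S_e S_e1 pairs] Hw Hz Hfz Hd.
move: (Hfz) => /andP [HzS HzM].
have Hnw : forall x, x \in V -> x != w.
  by move=> x Hx; apply/eqP => E; move: (new_fresh Hw); rewrite -E Hx.
have Hdead : c_blocked (z :: M).
  case: Hd => [H|H]; first exact: c_blocked_cons.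
  by exists z; split=> //; rewrite mem_head.
split=> //.
- move=> x Hx; rewrite inE negb_or SM // andbT; apply/eqP => E; move: HzS; by rewrite -E Hx.
- move=> x Hx Hxc Hxe; rewrite inE (negbTE (Hnw x Hx)) /= => /(M_old x Hx Hxc Hxe) H.
  by apply/orP; right.
- rewrite (unclaimed_consM_neq S' M' (Hnw c c_in)) (unclaimed_consM_neq S' M' (Hnw e e_in)).
  apply: leq_trans free_ce; apply: leq_add; exact: unclaimed_consM.
- by rewrite inE (negbTE (Hnw e e_in)) /= => /M_e H; rewrite inE H orbT.
Qed.

(* A move on [c] or [e] in A is played on [e] in A' while [e] is free: Staller
   needs [e] for her threats along the new paths. *)
Definition ce_reply S' M' := if unclaimed S' M' e then e else c.
Definition sim_reply S' M' v := if (v == c) || (v == e) then ce_reply S' M' else v.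

Lemma sim_inv_staller_ce S' M' S M v : sim_inv S' M' S M -> v = c \/ v = e ->
  unclaimed S M v -> [/\ ce_reply S' M' \in V, unclaimed S' M' (ce_reply S' M')
                       & sim_inv (ce_reply S' M' :: S') M' (v :: S) M].
Proof.
move=> [SM S_old M_old S_ce free_ce M_e S_e S_e1 pairs] Hvce Hfv.
move: (Hfv) => /andP [HvS HvM].
set v' := ce_reply S' M'.
have Hv' : v' = c \/ v' = e by rewrite /v' /ce_reply; case: (unclaimed S' M' e); [right|left].
have Hfv' : unclaimed S' M' v'.
  rewrite /v' /ce_reply; case: (boolP (unclaimed S' M' e)) => // He.
  have := free_ce; rewrite -(unclaimed_ce_consM (M:=M) Hvce Hfv) (negbTE He) addn0.
  by case: (unclaimed S' M' c).
have Hv'V : v' \in V by case: Hv' => ->; [apply: c_in|apply: e_in].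
have e_reply : unclaimed S' M' e || (e \in S') -> e \in v' :: S'.
  rewrite /v' /ce_reply; case: (unclaimed S' M' e) => /= [|eS]; first by rewrite mem_head.
  by rewrite inE eS orbT.
move: (Hfv') => /andP [Hv'S Hv'M].
split=> //; split=> //.
- by move=> x; rewrite inE => /predU1P [->|/SM].
- move=> x Hx Hxc Hxe; rewrite !inE S_old //.
  have Hxv : (x == v) = false by apply/negbTE; case: Hvce => ->.
  have Hxv' : (x == v') = false by apply/negbTE; case: Hv' => ->.
  by rewrite Hxv Hxv'.
- by rewrite (claimed_ce_consS Hv' Hv'S) (claimed_ce_consS Hvce HvS) S_ce.
- have HA := unclaimed_ce_consS Hvce Hfv; have HA' := unclaimed_ce_consS Hv' Hfv'.
  by move: free_ce; rewrite -HA -HA' ltnS.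
- rewrite inE => /predU1P [Ee|/S_e eS]; apply: e_reply; last by rewrite eS orbT.
  rewrite /unclaimed; case: (e \in S'); rewrite ?orbT //= orbF.
  by apply/negP => /M_e; rewrite Ee (negbTE HvM).
- move=> _ Hnd; apply: e_reply; rewrite /unclaimed; case: (e \in S'); rewrite ?orbT //= orbF.
  by apply/negP => /M_e eM; apply: Hnd; exists e; split=> //; right.
- move=> Hnd q j Hq Hj; rewrite pair_ok_consS; first exact: pairs.
  + by rewrite eq_sym; apply: path_neq_old Hq (ltnW Hj) Hv'V.
  + by rewrite eq_sym; apply: path_neq_old Hq Hj Hv'V.
Qed.

Lemma sim_inv_staller_old S' M' S M v : sim_inv S' M' S M ->
  v \in V -> v != c -> v != e -> unclaimed S M v ->
  unclaimed S' M' v /\ sim_inv (v :: S') M' (v :: S) M.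
Proof.
move=> [SM S_old M_old S_ce free_ce M_e S_e S_e1 pairs] Hv Hvc Hve /andP [HvS HvM].
have Hcv : c != v by rewrite eq_sym.
have Hev : e != v by rewrite eq_sym.
split.
  rewrite /unclaimed S_old // HvS /=.
  by apply/negP => /(M_old v Hv Hvc Hve); rewrite (negbTE HvM).
split=> //.
- by move=> x; rewrite inE => /predU1P [->|/SM].
- by move=> x Hx Hxc Hxe; rewrite !inE S_old.
- by rewrite !inE (negbTE Hcv) (negbTE Hev).
- by rewrite !unclaimed_consS_neq.
- by rewrite inE (negbTE Hev) => /S_e H; rewrite inE H orbT.
- by rewrite !inE (negbTE Hcv) (negbTE Hev) => H1 H2; apply/orP; right; apply: S_e1.
- move=> Hnd q j Hq Hj; rewrite pair_ok_consS; first exact: pairs.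
  + by rewrite eq_sym; apply: path_neq_old Hq (ltnW Hj) Hv.
  + by rewrite eq_sym; apply: path_neq_old Hq Hj Hv.
Qed.

Lemma sim_inv_staller S' M' S M v : sim_inv S' M' S M -> v \in V -> unclaimed S M v ->
  [/\ sim_reply S' M' v \in V, unclaimed S' M' (sim_reply S' M' v)
    & sim_inv (sim_reply S' M' v :: S') M' (v :: S) M].
Proof.
move=> HI Hv Hfv; rewrite /sim_reply.
case: (boolP ((v == c) || (v == e))) => [/orP Hvce|]; last first.
  by rewrite negb_or => /andP [Hvc Hve]; have [] := sim_inv_staller_old HI Hv Hvc Hve Hfv.
by apply: sim_inv_staller_ce HI _ Hfv; case: Hvce => /eqP; [left|right].
Qed.

Lemma even_double_ltS n k : ~~ odd n -> k.*2 < n -> k.*2.+1 < n.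
Proof.
move=> He Hk; rewrite -(odd_double_half n) (negbTE He) add0n in Hk *.
move: Hk; clear; lia.
Qed.

(* Walking along the route towards [e], which Staller owns, free pairs follow
   each other until one is followed by a vertex of Staller. *)
Lemma free_pair_before_staller S' M' S M q j :
  sim_inv S' M' S M -> ~ c_blocked M -> e \in S' -> q \in P ->
  j.*2.+1 < size q -> unclaimed S' M' (nth 0 q j.*2) -> unclaimed S' M' (nth 0 q j.*2.+1) ->
  exists j', [/\ j'.*2.+1 < size q, unclaimed S' M' (nth 0 q j'.*2),
                 unclaimed S' M' (nth 0 q j'.*2.+1) & nth 0 (route c e q) j'.*2.+3 \in S'].
Proof.
move=> HI Hnd HeS Hq.
have pairs : forall j, j.*2.+1 < size q -> pair_ok S' M' q j.
  by move=> j0 Hj0; apply: (pairs_ok HI Hnd Hq Hj0).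
have Hev := paths_even Hq.
suff H : forall n j, size q - j.*2 <= n -> j.*2.+1 < size q ->
    unclaimed S' M' (nth 0 q j.*2) -> unclaimed S' M' (nth 0 q j.*2.+1) ->
    exists j', [/\ j'.*2.+1 < size q, unclaimed S' M' (nth 0 q j'.*2),
                 unclaimed S' M' (nth 0 q j'.*2.+1) & nth 0 (route c e q) j'.*2.+3 \in S'].
  by apply: (H (size q - j.*2)).
elim=> [|n IH] j0 Hn Hj Hf1 Hf2.
  by move: Hn Hj; clear; lia.
case: (boolP (j0.*2.+2 == size q)) => [/eqP E|Hne].
  by exists j0; split=> //; rewrite E route_nth_last.
have Hj2 : j0.*2.+2 < size q by rewrite ltn_neqAle Hne Hj.
have Hj3 : (j0.+1).*2.+1 < size q.
  by apply: even_double_ltS => //; rewrite doubleS.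
have E3 : nth 0 (route c e q) j0.*2.+3 = nth 0 q (j0.+1).*2.
  by rewrite doubleS route_nthS.
case: (boolP (nth 0 q (j0.+1).*2 \in S')) => Hin.
  by exists j0; split=> //; rewrite E3.
have := pairs _ Hj3; rewrite /pair_ok (negbTE Hin) /= orbF => /andP [Hf1' Hf2'].
apply: (IH j0.+1) => //.
by move: Hn Hj3; rewrite doubleS; clear; lia.
Qed.

Definition wins_A := staller_wins V a (predominated V X).
Definition wins_A' := staller_wins V' a' (predominated V' X').

Lemma path_in_V' q i : q \in P -> i < size q -> nth 0 q i \in V'.
Proof. by move=> Hq Hi; apply: new_in_V; apply: mem_flatten_nth. Qed.

Lemma pair_neq_self q j : q \in P -> j.*2.+1 < size q -> nth 0 q j.*2.+1 != nth 0 q j.*2.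
Proof.
move=> Hq Hj; apply/eqP => E.
have [_ ] := new_pos_inj Hq Hq Hj (ltnW Hj) E; clear; lia.
Qed.

Lemma pair_threat_wins S' M' q j w : q \in P -> j.*2.+1 < size q ->
  unclaimed S' M' (nth 0 q j.*2) -> unclaimed S' M' (nth 0 q j.*2.+1) ->
  nth 0 (route c e q) j.*2.+3 \in S' -> w \notin M' -> w != nth 0 q j.*2.+1 ->
  wins_A' (nth 0 q j.*2 :: S') (w :: M').
Proof.
move=> Hq Hj /andP [H1S H1M] /andP [H2S H2M] Hsucc HwM Hwv.
apply: (@SW_step _ _ _ _ _ (nth 0 q j.*2.+1)).
- exact: path_in_V'.
- by rewrite inE negb_or pair_neq_self.
- by rewrite inE negb_or H2M andbT eq_sym.
left; exists (nth 0 q j.*2.+1); split.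
- exact: path_in_V'.
- by rewrite mem_filter path_class //= odd_double.
move=> z [->|Hz]; first by rewrite mem_head.
case: (adj_path Hq Hj Hz) => ->.
  by rewrite route_nthS ?(ltnW Hj) // !inE eqxx orbT.
by rewrite !inE Hsucc !orbT.
Qed.

Lemma num_unclaimed_pair S' M' x y : x \in V' -> unclaimed S' M' x ->
  num_unclaimed (x :: S') (y :: M') < num_unclaimed S' M'.
Proof.
move=> Hx Hf; apply: count_sub_lt.
  move=> z; rewrite /unclaimed !inE !negb_or => /andP [/andP [_ ->] /andP [_ ->]] //.
by exists x; split=> //; rewrite /unclaimed mem_head.
Qed.

Lemma sim_claimed_c S' M' S M v : sim_inv S' M' S M -> v \in V -> unclaimed S M v ->
  (e \in S' -> ~ c_blocked M -> forall q j, q \in P -> j.*2.+1 < size q ->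
      ~~ (unclaimed S' M' (nth 0 q j.*2) && unclaimed S' M' (nth 0 q j.*2.+1))) ->
  nbhd_claimed a (v :: S) c -> nbhd_claimed a' (sim_reply S' M' v :: S') c.
Proof.
move=> HI Hv Hfv no_free Hn.
have [_ _ [_ S_old' _ S_ce' _ _ _ _ _]] := sim_inv_staller HI Hv Hfv.
set v' := sim_reply S' M' v in S_old' S_ce' *.
move: (Hfv) => /andP [HvS HvM].
have HcS : c \in v :: S by apply: Hn; left.
have HeS : e \in v :: S by apply: Hn; right.
have /andP [Hc' He'] : (c \in v' :: S') && (e \in v' :: S').
  by move: S_ce'; rewrite HcS HeS /=; case: (c \in v' :: S'); case: (e \in v' :: S').
have Hnd : ~ c_blocked M.
  move=> [z [Hz HzM]]; move: (Hn z Hz); rewrite inE => /predU1P [E|HzS].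
    by move: HvM; rewrite -E HzM.
  by move: (imag_disjoint HI HzS); rewrite HzM.
have HeS' : e \in S'.
  apply: (staller_e_first HI _ Hnd); move: HcS HeS; rewrite !inE.
  case/predU1P => [E1|->//] /predU1P [E2|->]; last by rewrite orbT.
  by move: c_neq_e; rewrite E1 E2 eqxx.
move=> z [->//|Hz].
case: (adj_c Hz) => [[Hcz Hze]|[->//|[q [Hq Hsz ->]]]].
  have Hzc : z != c by apply/eqP => E; move: (a_bip Hcz); rewrite cX E cX.
  by rewrite S_old' //; [apply: Hn; right | case: (a_in Hcz)].
have Hq1 : 0.*2.+1 < size q by apply: even_double_ltS; [apply: paths_even|].
have := pairs_ok HI Hnd Hq Hq1; rewrite /pair_ok.
have := no_free HeS' Hnd q 0 Hq Hq1 => /negbTE -> /= /andP [H _].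
by rewrite inE H orbT.
Qed.

Lemma sim_claimed_old S' M' S M v u : sim_inv S' M' S M -> v \in V -> unclaimed S M v ->
  u \in V -> u \in X -> u != c ->
  nbhd_claimed a (v :: S) u -> nbhd_claimed a' (sim_reply S' M' v :: S') u.
Proof.
move=> HI Hv Hfv Hu HuX Huc Hn.
have [_ _ [_ S_old' _ _ _ _ S_e' _ _]] := sim_inv_staller HI Hv Hfv.
have Hue : u != e by apply/eqP => E; move: HuX; rewrite E (negbTE e_notin).
move=> z [->|Hz]; first by rewrite S_old' //; apply: Hn; left.
have Haz := adj_old Hu Huc Hue Hz.
have HzS : z \in v :: S by apply: Hn; right.
have Hzc : z != c by apply/eqP => E; move: (a_bip Haz); rewrite HuX E cX.
case: (eqVneq z e) => [Eze|Hze]; first by subst z; apply: S_e'.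
by rewrite S_old' //; case: (a_in Haz).
Qed.

Lemma sim_staller_win S' M' S M v : sim_inv S' M' S M -> v \in V -> unclaimed S M v ->
  (e \in S' -> ~ c_blocked M -> forall q j, q \in P -> j.*2.+1 < size q ->
      ~~ (unclaimed S' M' (nth 0 q j.*2) && unclaimed S' M' (nth 0 q j.*2.+1))) ->
  (exists u, [/\ u \in V, u \notin predominated V X & nbhd_claimed a (v :: S) u]) ->
  exists u, [/\ u \in V', u \notin predominated V' X' & nbhd_claimed a' (sim_reply S' M' v :: S') u].
Proof.
move=> HI Hv Hfv no_free [u [Hu HuD Hn]].
have HuX : u \in X by move: HuD; rewrite mem_filter Hu andbT negbK.
exists u; split; [exact: V_sub | by rewrite mem_filter negb_and negbK X_sub |].
case: (eqVneq u c) => [Euc|Huc]; last exact: sim_claimed_old HI Hv Hfv Hu HuX Huc Hn.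
by rewrite Euc in Hn *; apply: sim_claimed_c HI Hv Hfv no_free Hn.
Qed.

Lemma sim_dominator_has_move S' M' S M w0 : sim_inv S' M' S M ->
  w0 \in V -> unclaimed S M w0 -> exists w, [/\ w \in V', w \notin S' & w \notin M'].
Proof.
move=> [_ S_old M_old _ free_ce _ _ _ _] Hw0 /andP [Hw0S Hw0M].
case: (boolP ((w0 == c) || (w0 == e))) => Hce'.
  have Hpos : (0 < unclaimed S' M' c + unclaimed S' M' e)%N.
    apply: leq_trans free_ce.
    by case/orP: Hce' => /eqP <-; rewrite /unclaimed Hw0S Hw0M // addn1.
  case: (boolP (unclaimed S' M' c)) => [/andP [? ?]|Hc].
    by exists c; split=> //; apply: V_sub; apply: c_in.
  have /andP [? ?] : unclaimed S' M' e.
    by move: Hpos; rewrite (negbTE Hc); case: (unclaimed S' M' e).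
  by exists e; split=> //; apply: V_sub; apply: e_in.
move: Hce'; rewrite negb_or => /andP [Hw0c Hw0e].
exists w0; split; [exact: V_sub | by rewrite S_old |].
by apply/negP => /(M_old w0 Hw0 Hw0c Hw0e); rewrite (negbTE Hw0M).
Qed.

Lemma sim_dominator_imagined_old S' M' S M w w0 : sim_inv S' M' S M ->
  w0 \in V -> unclaimed S M w0 -> w \in V -> unclaimed S' M' w ->
  exists z, [/\ z \in V, unclaimed S M z & sim_inv S' (w :: M') S (z :: M)].
Proof.
move=> HI Hw0 Hfw0 Hw Hfw.
case: (boolP ((w == c) || (w == e))) => Hwce.
  have Hwce' : w = c \/ w = e by case/orP: Hwce => /eqP ->; [left|right].
  case: (boolP ((w == e) && unclaimed S M e)) => Hwe.
    case/andP: Hwe => _ He; exists e; split=> //; first exact: e_in.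
    by apply: sim_inv_dom_ce => //; [apply: e_in|right; right].
  case: (boolP (unclaimed S M c)) => Hc.
    exists c; split=> //; first exact: c_in.
    apply: sim_inv_dom_ce => //; first exact: c_in.
      by move=> E1 E2; move: Hwe; rewrite E1 eqxx E2.
    by right; left.
  case: (boolP (unclaimed S M e)) => He.
    exists e; split=> //; first exact: e_in.
    by apply: sim_inv_dom_ce => //; [apply: e_in|right; right].
  exists w0; split=> //; apply: sim_inv_dom_ce => //.
    by move=> _ He'; move: He; rewrite He'.
  by left; rewrite (negbTE Hc) (negbTE He).
move: Hwce; rewrite negb_or => /andP [Hwc Hwe].
case: (boolP (w \in M)) => HwM.
  by exists w0; split=> //; apply: sim_inv_dom_old => //; rewrite inE HwM orbT.
have Hfw' : unclaimed S M w.
  by case/andP: Hfw => HwS _; rewrite /unclaimed -(staller_old HI) // HwS HwM.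
by exists w; split=> //; apply: sim_inv_dom_old => //; rewrite mem_head.
Qed.

(* Dominator's move [w] in A' is mirrored by an imagined move [z] in A, except
   when [w] is the second vertex of a pair on a path: then Staller answers
   directly with the first vertex of that pair. *)
Lemma sim_dominator_imagined S' M' S M w w0 : sim_inv S' M' S M ->
  w0 \in V -> unclaimed S M w0 ->
  ~ (exists u, [/\ u \in V, u \notin predominated V X & nbhd_claimed a S u]) ->
  w \in V' -> unclaimed S' M' w ->
  (forall q j, q \in P -> j.*2.+1 < size q -> w = nth 0 q j.*2.+1 -> c_blocked M) ->
  exists z, [/\ z \in V, unclaimed S M z & sim_inv S' (w :: M') S (z :: M)].
Proof.
move=> HI Hw0 Hfw0 no_win Hw Hfw not_second.
case: (V_split Hw) => [HwV|HwC]; first exact: sim_dominator_imagined_old HI Hw0 Hfw0 HwV Hfw.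
case: (classic (c_blocked M)) => Hd.
  by exists w0; split=> //; apply: sim_inv_dom_path => //; left.
have [q [i [Hq Hi Ew]]] := new_pos HwC.
have Hodd : ~~ odd i.
  apply/negP => Hodd; apply: Hd; apply: (not_second q i./2 Hq).
    by rewrite -{1}(odd_double_half i) Hodd add1n in Hi.
  by rewrite Ew -{1}(odd_double_half i) Hodd add1n.
have [z [Hz HzS]] : exists z, (z = c \/ a c z) /\ z \notin S.
  apply: NNPP => Hno; apply: no_win; exists c; split.
  - exact: c_in.
  - by rewrite mem_filter cX.
  move=> z Hz; apply: NNPP => HzS; apply: Hno; exists z; split=> //; exact/negP.
have HzM : z \notin M by apply/negP => HzM; apply: Hd; exists z.
have HzV : z \in V by case: Hz => [->|/a_in []]; [apply: c_in|].
have Hfz : unclaimed S M z by rewrite /unclaimed HzS HzM.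
by exists z; split=> //; apply: sim_inv_dom_path => //; right.
Qed.

Lemma sim_dominator_turn S M :
  (exists w, [/\ w \in V, w \notin S & w \notin M]) ->
  (forall w, w \in V -> w \notin S -> w \notin M ->
     forall n S' M', num_unclaimed S' M' < n -> sim_inv S' M' S (w :: M) -> wins_A' S' M') ->
  ~ (exists u, [/\ u \in V, u \notin predominated V X & nbhd_claimed a S u]) ->
  forall n S' M', num_unclaimed S' M' < n -> sim_inv S' M' S M ->
  (exists w, [/\ w \in V', w \notin S' & w \notin M']) /\
  (forall w, w \in V' -> w \notin S' -> w \notin M' -> wins_A' S' (w :: M')).
Proof.
move=> [w0 [Hw0 Hw0S Hw0M]] next no_win.
have Hfw0 : unclaimed S M w0 by rewrite /unclaimed Hw0S Hw0M.
elim=> [|n IH] S' M' Hn HI //.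
split; first exact: sim_dominator_has_move HI Hw0 Hfw0.
move=> w Hw HwS HwM.
have Hfw : unclaimed S' M' w by rewrite /unclaimed HwS HwM.
case: (classic (exists q j,
    [/\ ~ c_blocked M, q \in P, j.*2.+1 < size q & w = nth 0 q j.*2.+1])) =>
    [[q [j [Hd Hq Hj Ew]]]|imagined]; last first.
  have not_second q j : q \in P -> j.*2.+1 < size q -> w = nth 0 q j.*2.+1 -> c_blocked M.
    by move=> Hq Hj Ew; apply: NNPP => Hd; apply: imagined; exists q, j.
  have [z [Hz /andP [HzS HzM] HI']] :=
    sim_dominator_imagined HI Hw0 Hfw0 no_win Hw Hfw not_second.
  exact: (next z Hz HzS HzM _ _ _ (ltnSn _) HI').
subst w.
have := pairs_ok HI Hd Hq Hj.
rewrite /pair_ok (negbTE HwM) andbF orbF Hfw andbT => Hf1.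
apply: (@SW_step _ _ _ _ _ (nth 0 q j.*2)).
- exact: path_in_V' Hq (ltnW Hj).
- by case/andP: Hf1.
- rewrite inE negb_or; case/andP: Hf1 => _ ->; rewrite andbT eq_sym.
  exact: pair_neq_self.
right; apply: IH.
  apply: (leq_trans (num_unclaimed_pair (nth 0 q j.*2.+1) (path_in_V' Hq (ltnW Hj)) Hf1)).
  by rewrite -ltnS.
exact: sim_inv_pair.
Qed.

Lemma sim_staller_turn S M : wins_A S M ->
  forall n S' M', num_unclaimed S' M' < n -> sim_inv S' M' S M -> wins_A' S' M'.
Proof.
move=> H; elim/staller_wins_ind': H => {}S {}M v Hv HvS HvM Hor.
elim=> [|n IHn] S' M' Hn HI //.
have Hfv : unclaimed S M v by rewrite /unclaimed HvS HvM.
case: (classic (e \in S' /\ ~ c_blocked M /\ exists q j, [/\ q \in P, j.*2.+1 < size q,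
    unclaimed S' M' (nth 0 q j.*2) & unclaimed S' M' (nth 0 q j.*2.+1)])) =>
  [[HeS [Hnd [q [j [Hq Hj Hf1 Hf2]]]]]|Hnot].
  have [j' [Hj' Hf1' Hf2' Hsucc]] := free_pair_before_staller HI Hnd HeS Hq Hj Hf1 Hf2.
  apply: (@SW_step _ _ _ _ _ (nth 0 q j'.*2)).
  - exact: path_in_V' Hq (ltnW Hj').
  - by case/andP: Hf1'.
  - by case/andP: Hf1'.
  right; split.
    exists (nth 0 q j'.*2.+1); split.
    - exact: path_in_V'.
    - by rewrite inE negb_or pair_neq_self //; case/andP: Hf2'.
    - by case/andP: Hf2'.
  move=> w Hw HwS HwM.
  case: (eqVneq w (nth 0 q j'.*2.+1)) => [->|Hwv].
    apply: IHn; last exact: sim_inv_pair.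
    apply: (leq_trans (num_unclaimed_pair (nth 0 q j'.*2.+1) (path_in_V' Hq (ltnW Hj')) Hf1')).
    by rewrite -ltnS.
  exact: pair_threat_wins.
have [Hv'V Hfv' HI'] := sim_inv_staller HI Hv Hfv.
apply: (@SW_step _ _ _ _ _ (sim_reply S' M' v)).
- exact: V_sub.
- by case/andP: Hfv'.
- by case/andP: Hfv'.
case: (classic (exists u, [/\ u \in V, u \notin predominated V X & nbhd_claimed a (v :: S) u])) => Hwin.
  left; apply: (sim_staller_win HI Hv Hfv) => // HeS Hnd q j Hq Hj; apply/negP => /andP [H1 H2].
  by apply: Hnot; split=> //; split=> //; exists q, j; split.
right.
case: Hor => [//|[Hex Hall]].
exact: (sim_dominator_turn Hex Hall Hwin (n := (num_unclaimed (sim_reply S' M' v :: S') M').+1)).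
Qed.

Lemma replacement_staller_wins :
  staller_wins_game V a (predominated V X) -> staller_wins_game V' a' (predominated V' X').
Proof. by move=> win; apply: (sim_staller_turn win (ltnSn _)). Qed.

End Simulation.
Lemma consec_mem s u v : consec s u v -> u \in s /\ v \in s.
Proof. by move=> [i [Hi [<- <-]]]; split; apply: mem_nth => //; apply: ltnW. Qed.

Lemma consec_at (s : seq nat) k : k.+1 < size s -> consec s (nth 0 s k) (nth 0 s k.+1).
Proof. by move=> Hk; exists k. Qed.

Lemma consec_succ s u v : uniq s -> consec s u v ->
  (index u s).+1 < size s /\ v = nth 0 s (index u s).+1.
Proof.
move=> Hu [i [Hi [Eu Ev]]].
have -> : index u s = i by rewrite -Eu index_uniq // ltnW.
by [].
Qed.

Lemma consec_pred s u v : uniq s -> consec s u v ->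
  [/\ 0 < index v s, index v s < size s & u = nth 0 s (index v s).-1].
Proof.
move=> Hu [i [Hi [Eu Ev]]].
have -> : index v s = i.+1 by rewrite -Ev index_uniq.
by [].
Qed.

Lemma consec_rev1 (s : seq nat) u v : consec (rev s) u v -> consec s v u.
Proof.
move=> [i [Hi [Eu Ev]]]; rewrite size_rev in Hi.
exists (size s - i.+2); split.
  by move: Hi; clear; lia.
rewrite !nth_rev ?size_rev in Eu Ev; try (move: Hi; clear; lia).
split.
  by rewrite -Ev; congr nth; move: Hi; clear; lia.
by rewrite -Eu; congr nth; move: Hi; clear; lia.
Qed.

Lemma consec_rev (s : seq nat) u v : consec (rev s) u v <-> consec s v u.
Proof.
split; first exact: consec_rev1.
by move=> H; apply: consec_rev1; rewrite revK.
Qed.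

Lemma rev_path (x y : nat) q : rev (x :: q ++ [:: y]) = y :: rev q ++ [:: x].
Proof. by rewrite rev_cons rev_cat /= -cats1. Qed.

Lemma mem_flatten_rev (P : seq (seq nat)) v : (v \in flatten (map rev P)) = (v \in flatten P).
Proof. by elim: P => [|q P IH] //=; rewrite !mem_cat mem_rev IH. Qed.

Lemma uniq_flatten_rev (P : seq (seq nat)) : uniq (flatten (map rev P)) = uniq (flatten P).
Proof.
elim: P => [|q P IH] //=; rewrite !cat_uniq rev_uniq IH; congr (_ && (_ && _)).
congr negb; rewrite (eq_has_r (mem_flatten_rev P)).
by apply: eq_has => z; rewrite /= mem_rev.
Qed.

Section Replacement.
Variables (V : seq nat) (a : nat -> nat -> Prop) (X : seq nat) (c e : nat)
  (P : seq (seq nat)) (V' : seq nat) (a' : nat -> nat -> Prop) (X' : seq nat).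
Hypothesis A_crit : critical_bipartite V a X.
Hypothesis ce_adj : a c e.
Hypothesis cX : c \in X.
Hypothesis P_size : 2 <= size P.
Hypothesis P_even : forall q, q \in P -> ~~ odd (size q).
Hypothesis P_uniq : uniq (flatten P).
Hypothesis P_fresh : forall v, v \in flatten P -> v \notin V.
Hypothesis V'_def : forall v, v \in V' <-> v \in V \/ v \in flatten P.
Hypothesis a'_def : forall u v, a' u v <->
       (a u v /\ ~ ((u = c /\ v = e) \/ (u = e /\ v = c))) \/
       exists q, q \in P /\
         (consec (c :: q ++ [:: e]) u v \/ consec (c :: q ++ [:: e]) v u).
Hypothesis X_sub : {subset X <= X'}.
Hypothesis X'_sub : {subset X' <= V'}.
Hypothesis a'_bip : forall u v, a' u v -> (u \in X' <-> v \notin X').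

Let cV : c \in V := c_in (adj_in A_crit) ce_adj.
Let eV : e \in V := e_in (adj_in A_crit) ce_adj.
Let eX : e \notin X := e_notin (adj_bipartite A_crit) ce_adj cX.
Let ce_neq : c != e := c_neq_e (adj_bipartite A_crit) ce_adj cX.

Lemma path_uniq q : q \in P -> uniq q.
Proof.
move: P_uniq; elim: P => [|q0 P' IH] //=; rewrite cat_uniq => /and3P [H1 _ H3].
by rewrite inE => /orP [/eqP ->|/(IH H3)].
Qed.

Lemma path_unique q q' z : q \in P -> q' \in P -> z \in q -> z \in q' -> q = q'.
Proof.
move: P_uniq; elim: P => [|q0 P' IH] //=; rewrite cat_uniq => /and3P [_ Hd H3].
have Hdis : forall y, y \in q0 -> y \in flatten P' -> False.
  move=> y Hy Hy'; move/hasPn: Hd => /(_ y Hy'); by rewrite Hy.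
rewrite !inE => /orP [/eqP ->|Hq] /orP [/eqP ->|Hq'] //.
- move=> Hz Hz'; exfalso; apply: (Hdis z Hz); apply/flattenP; by exists q'.
- move=> Hz Hz'; exfalso; apply: (Hdis z Hz'); apply/flattenP; by exists q.
- exact: IH.
Qed.

Lemma new_pos_inj q q' i i' : q \in P -> q' \in P -> i < size q -> i' < size q' ->
  nth 0 q i = nth 0 q' i' -> q = q' /\ i = i'.
Proof.
move=> Hq Hq' Hi Hi' E.
have Eq : q = q'.
  apply: (path_unique (z := nth 0 q i)) => //; first exact: mem_nth.
  by rewrite E; apply: mem_nth.
subst q'; split=> //; apply/eqP; rewrite -(nth_uniq 0 Hi Hi' (path_uniq Hq)); exact/eqP.
Qed.

Lemma new_pos z : z \in flatten P -> exists q i, [/\ q \in P, i < size q & z = nth 0 q i].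
Proof.
move=> /flattenP [q Hq Hz]; exists q, (index z q); split=> //; first by rewrite index_mem.
by rewrite nth_index.
Qed.

Lemma mem_flatten_path q z : q \in P -> z \in q -> z \in flatten P.
Proof. by move=> Hq Hz; apply/flattenP; exists q. Qed.

Lemma mem_route q z : z \in route c e q -> [\/ z = c, z \in q | z = e].
Proof.
rewrite /route inE mem_cat inE => /orP [/eqP ->|/orP [H|/eqP ->]];
  by [constructor 1|constructor 2|constructor 3].
Qed.

Lemma route_uniq q : q \in P -> uniq (route c e q).
Proof.
move=> Hq; rewrite /route /= cat_uniq path_uniq //= andbT mem_cat inE negb_or ce_neq andbT.
have Hc : c \notin q by apply/negP => /(mem_flatten_path Hq) /P_fresh; rewrite cV.
have He : e \notin q by apply/negP => /(mem_flatten_path Hq) /P_fresh; rewrite eV.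
by rewrite Hc orbF He.
Qed.

Lemma size_route q : size (route c e q) = (size q).+2.
Proof. by rewrite /route /= size_cat addn1. Qed.

Lemma a'_route q k : q \in P -> k.+1 < size (route c e q) ->
  a' (nth 0 (route c e q) k) (nth 0 (route c e q) k.+1).
Proof. by move=> Hq Hk; apply/a'_def; right; exists q; split=> //; left; apply: consec_at. Qed.

Lemma a'_sym u v : a' u v -> a' v u.
Proof.
move/a'_def => [[Hauv Hn]|[q [Hq H]]]; apply/a'_def.
  by left; split; [apply: (adj_sym A_crit) | tauto].
by right; exists q; split=> //; tauto.
Qed.

Lemma a'_in u v : a' u v -> u \in V' /\ v \in V'.
Proof.
have HLV : forall q z, q \in P -> z \in route c e q -> z \in V'.
  move=> q z Hq /mem_route [->|Hz|->]; apply/V'_def;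
    [left; exact: cV|right; exact: mem_flatten_path Hz|left; exact: eV].
move/a'_def => [[Hauv _]|[q [Hq [H|H]]]].
- by case: (adj_in A_crit Hauv) => H1 H2; split; apply/V'_def; left.
- by case: (consec_mem H) => H1 H2; split; apply: HLV Hq _.
- by case: (consec_mem H) => H1 H2; split; apply: HLV Hq _.
Qed.

Lemma route_class q k : q \in P -> k <= (size q).+1 -> (nth 0 (route c e q) k \in X') = ~~ odd k.
Proof.
move=> Hq; elim: k => [|k IH] Hk; first by rewrite /= X_sub.
have Hedge := a'_route Hq (k := k); rewrite size_route in Hedge.
have := a'_bip (Hedge ltac:(by [])) => Hiff.
rewrite /= -IH; last by apply: ltnW.
case: (boolP (nth 0 (route c e q) k \in X')) => Hx /=.
  by rewrite (negbTE (proj1 Hiff Hx)).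
by apply/negPn/negP => Hy; move/negP: Hx; apply; apply/Hiff.
Qed.

Lemma route_nth q k : 0 < k -> k <= size q -> nth 0 (route c e q) k = nth 0 q k.-1.
Proof. by case: k => // k _ Hk; rewrite /route /= nth_cat Hk. Qed.

Lemma index_route q i : q \in P -> i < size q -> index (nth 0 q i) (route c e q) = i.+1.
Proof.
move=> Hq Hi; rewrite -(route_nth (k := i.+1)) //.
apply: index_uniq; last exact: route_uniq.
by rewrite size_route ltnS ltnW.
Qed.

Lemma adj_old u w : u \in V -> u != c -> u != e -> a' u w -> a u w.
Proof.
move=> Hu Huc Hue /a'_def [[H _]//|[q [Hq H]]].
have Hu' : u \in route c e q by case: H => /consec_mem [].
case/mem_route: Hu' => [E|Hin|E].
- by move: Huc; rewrite E eqxx.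
- by move: (P_fresh (mem_flatten_path Hq Hin)); rewrite Hu.
- by move: Hue; rewrite E eqxx.
Qed.

Lemma adj_c w : a' c w ->
  (a c w /\ w != e) \/ w = e \/ exists q, [/\ q \in P, 0 < size q & w = nth 0 q 0].
Proof.
move/a'_def => [[H Hn]|[q [Hq [H|H]]]].
- by left; split=> //; apply/eqP => E; apply: Hn; left.
- have [_ ->] := consec_succ (route_uniq Hq) H.
  rewrite /route /= eqxx /=; case: q Hq {H} => [|x q] Hq /=; first by right; left.
  by right; right; exists (x :: q).
- have [H0 _ _] := consec_pred (route_uniq Hq) H.
  by move: H0; rewrite /route /= eqxx.
Qed.

Lemma adj_path q i w : q \in P -> i < size q -> a' (nth 0 q i) w ->
  w = nth 0 (route c e q) i \/ w = nth 0 (route c e q) i.+2.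
Proof.
move=> Hq Hi /a'_def [[H _]|[q' [Hq' H]]].
  by case: (adj_in A_crit H) => Hu _; move: (path_notin_V P_fresh Hq Hi); rewrite Hu.
have Hnin : nth 0 q i \in q by apply: mem_nth.
have Hq'q : nth 0 q i \in route c e q' -> q' = q.
  case/mem_route => [E|Hin|E].
  - by move: (path_notin_V P_fresh Hq Hi); rewrite E cV.
  - exact: (path_unique Hq' Hq Hin Hnin).
  - by move: (path_notin_V P_fresh Hq Hi); rewrite E eV.
case: H => H.
  have Eq := Hq'q (proj1 (consec_mem H)); subst q'.
  have [_ ->] := consec_succ (route_uniq Hq) H.
  by right; rewrite index_route.
have Eq := Hq'q (proj2 (consec_mem H)); subst q'.
have [_ _ ->] := consec_pred (route_uniq Hq) H.
by left; rewrite index_route.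
Qed.

Lemma path_class q i : q \in P -> i < size q -> (nth 0 q i \in X') = odd i.
Proof.
move=> Hq Hi; rewrite -(route_nth (k := i.+1)) // route_class //=; first by rewrite negbK.
by apply: leq_trans Hi _.
Qed.

Lemma P_nonempty : exists q, q \in P.
Proof. by case: P P_size => [|q P'] // _; exists q; rewrite mem_head. Qed.

Lemma e_notin_X' : e \notin X'.
Proof.
have [q Hq] := P_nonempty.
by rewrite -(route_nth_last c e q) route_class //= negbK (negbTE (P_even Hq)).
Qed.

Lemma old_X u : u \in V -> u \in X' -> u \in X.
Proof.
move=> Hu HuX'; apply: NNPP => /negP HuX.
case: (eqVneq u e) => [E|Hue]; first by move: e_notin_X'; rewrite -E HuX'.
have [w Haw] := predominated_nonisolated A_crit Hu HuX.
have Huc : u != c by apply/eqP => E; move: HuX; rewrite E cX.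
have Ha'w : a' u w.
  apply/a'_def; left; split=> //; move=> [[E _]|[E _]]; [move: Huc|move: Hue]; by rewrite E eqxx.
have HwX : w \in X by move: (adj_bipartite A_crit Haw); rewrite (negbTE HuX) => /esym/negbFE.
have := proj1 (a'_bip Ha'w) HuX'; by rewrite X_sub.
Qed.

Lemma rep_nonisolated u : u \in V' -> u \notin X' -> exists w, a' u w.
Proof.
move=> /V'_def [Hu|Hu] HuX'.
  have HuX : u \notin X by apply/negP => /X_sub; rewrite (negbTE HuX').
  case: (eqVneq u e) => [->|Hue].
    have [q Hq] := P_nonempty.
    exists (nth 0 (route c e q) (size q)); apply: a'_sym.
    have H := @a'_route q (size q) Hq; rewrite route_nth_last size_route in H; exact: H.
  have [w Haw] := predominated_nonisolated A_crit Hu HuX.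
  have Huc : u != c by apply/eqP => E; move: HuX; rewrite E cX.
  exists w; apply/a'_def; left; split=> //; move=> [[E _]|[E _]]; [move: Huc|move: Hue]; by rewrite E eqxx.
have [q [i [Hq Hi ->]]] := new_pos Hu.
exists (nth 0 (route c e q) i); apply: a'_sym.
have H := @a'_route q i Hq; rewrite (route_nth (k := i.+1)) // size_route in H.
by apply: H; rewrite ltnS ltnW.
Qed.

Lemma rep_staller_wins : staller_wins_game V' a' (predominated V' X').
Proof.
apply: (replacement_staller_wins (c := c) (e := e) (P := P) (V := V) (a := a) (X := X)).
- exact: (adj_in A_crit).
- exact: (adj_bipartite A_crit).
- exact: ce_adj.
- exact: cX.
- by move=> v Hv; apply/V'_def; left.
- by move=> v Hv; apply/V'_def; right.
- by move=> v /V'_def.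
- exact: P_fresh.
- exact: new_pos_inj.
- exact: new_pos.
- exact: P_even.
- exact: X_sub.
- exact: adj_old.
- exact: adj_c.
- exact: adj_path.
- exact: path_class.
- exact: (staller_wins_critical A_crit).
Qed.

Lemma route_vertex q k : q \in P -> k <= (size q).+1 ->
  [\/ k = 0 /\ nth 0 (route c e q) k = c,
      0 < k <= size q /\ nth 0 (route c e q) k \in flatten P |
      k = (size q).+1 /\ nth 0 (route c e q) k = e].
Proof.
move=> Hq Hk; case: k Hk => [|k] Hk; first by constructor 1.
case: (ltngtP k (size q)) => Hks.
- constructor 2; split=> //; rewrite route_nth //= ?ltnW //.
  by apply: (mem_flatten_path Hq); apply: mem_nth.
- by move: Hk; rewrite ltnS leqNgt Hks.
- by constructor 3; rewrite Hks route_nth_last.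
Qed.

Lemma route_nth_inj q q' k k' : q \in P -> q' \in P -> k <= (size q).+1 -> k' <= (size q').+1 ->
  nth 0 (route c e q) k = nth 0 (route c e q') k' ->
  [\/ q = q' /\ k = k', k = 0 /\ k' = 0 | k = (size q).+1 /\ k' = (size q').+1].
Proof.
move=> Hq Hq' Hk Hk' E.
have HcC : c \notin flatten P by apply/negP => /P_fresh; rewrite cV.
have HeC : e \notin flatten P by apply/negP => /P_fresh; rewrite eV.
have Hce' := ce_neq.
case: (route_vertex Hq Hk) => [[H1 H2]|[H1 H2]|[H1 H2]];
case: (route_vertex Hq' Hk') => [[H1' H2']|[H1' H2']|[H1' H2']].
- by constructor 2.
- by move: H2'; rewrite -E H2 (negbTE HcC).
- by move: Hce'; rewrite -H2' -E H2 eqxx.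
- by move: H2; rewrite E H2' (negbTE HcC).
- constructor 1.
  case/andP: H1 => A1 B1; case/andP: H1' => A1' B1'.
  case: k A1 B1 E {Hk H2} => // k _ B1; case: k' A1' B1' {Hk' H2'} => // k' _ B1'.
  rewrite !route_nth //= => E.
  by have [-> ->] := new_pos_inj Hq Hq' B1 B1' E.
- by move: H2; rewrite E H2' (negbTE HeC).
- by move: Hce'; rewrite -H2 E H2' eqxx.
- by move: H2'; rewrite -E H2 (negbTE HeC).
- by constructor 3.
Qed.

(* The vertices of X' on a route sit at its even positions [l.*2].  On the
   route of [q0] those before position [l0.*2] are matched forwards and those
   after it backwards; on the other routes all are matched backwards.  The
   vertex at position [l0.*2] of the route of [q0] is left unmatched. *)
Definition path_matching q0 l0 (u d : nat) := exists q l, [/\ q \in P, l.*2 <= size q,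
  u = nth 0 (route c e q) l.*2 &
  (q = q0 /\ l < l0 /\ d = nth 0 (route c e q) l.*2.+1) \/
  ((q != q0 \/ l0 < l) /\ 0 < l /\ d = nth 0 (route c e q) l.*2.-1)].

Lemma path_matchingE q0 l0 u d : path_matching q0 l0 u d -> exists q l k, [/\ q \in P, l.*2 <= size q,
  u = nth 0 (route c e q) l.*2, d = nth 0 (route c e q) k &
  [/\ 0 < k, k <= (size q).+1 &
  (q = q0 /\ l < l0 /\ k = l.*2.+1) \/ ((q != q0 \/ l0 < l) /\ 0 < l /\ k = l.*2.-1)]].
Proof.
move=> [q [l [Hq Hl Hu [[Hq0 [Hll0 Hd]]|[Hne [Hl0 Hd]]]]]].
  exists q, l, l.*2.+1; split=> //; split; [by []|by rewrite ltnS|by left].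
exists q, l, l.*2.-1; split=> //; split; [by move: Hl0; clear; lia|by move: Hl; clear; lia|by right].
Qed.

Lemma path_matching_adj q0 l0 u d : path_matching q0 l0 u d -> a' u d /\ u \in X'.
Proof.
move=> [q [l [Hq Hl -> H]]].
have HX : nth 0 (route c e q) l.*2 \in X' by rewrite route_class ?odd_double //; apply: leqW.
split=> //.
case: H => [[_ [_ ->]]|[_ [Hl0 ->]]].
  by apply: a'_route => //; rewrite size_route !ltnS.
apply: a'_sym.
have E : (l.*2.-1).+1 = l.*2 by move: Hl0; clear; lia.
have := @a'_route q l.*2.-1 Hq; rewrite E; apply.
by rewrite size_route ltnS leqW.
Qed.

Lemma path_matching_fun q0 l0 u d d' : path_matching q0 l0 u d -> path_matching q0 l0 u d' -> d = d'.
Proof.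
move=> [q [l [Hq Hl Hu H]]] [q' [l' [Hq' Hl' Hu' H']]].
have := route_nth_inj Hq Hq' (leqW Hl) (leqW Hl') (etrans (esym Hu) Hu').
case=> [[Eq El]|[El El']|[El _]].
- subst q'; have {}El : l = l' by move: El; clear; lia.
  subst l'.
  case: H => [[Eq [Hl0 ->]]|[Hne [Hl0 ->]]];
  case: H' => [[Eq' [Hl0' ->]]|[Hne' [Hl0' ->]]] //.
  + by case: Hne' => [/eqP|]; [|move: Hl0; clear; lia].
  + by case: Hne => [/eqP|]; [|move: Hl0'; clear; lia].
- have l0' : l = 0 by move: El; clear; lia.
  have l0'' : l' = 0 by move: El'; clear; lia.
  subst l l'.
  case: H => [[Eq [_ ->]]|[_ [//]]]; case: H' => [[Eq' [_ ->]]|[_ [//]]].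
  by rewrite Eq Eq'.
- by move: Hl El; clear; lia.
Qed.

Lemma path_matching_inj q0 l0 u u' d : path_matching q0 l0 u d -> path_matching q0 l0 u' d -> u = u'.
Proof.
move=> /path_matchingE [q [l [k [Hq Hl -> Hd [Hk0 Hk H]]]]]
       /path_matchingE [q' [l' [k' [Hq' Hl' -> Hd' [Hk0' Hk' H']]]]].
have Eqk : q = q' /\ k = k'.
  case: (route_nth_inj Hq Hq' Hk Hk' (etrans (esym Hd) Hd')) => [//|[E _]|[E E']].
    by move: Hk0; rewrite E.
  have Hs : forall q1 l1 k1, l1.*2 <= size q1 -> k1 = (size q1).+1 ->
      (q1 = q0 /\ l1 < l0 /\ k1 = l1.*2.+1) \/ ((q1 != q0 \/ l0 < l1) /\ 0 < l1 /\ k1 = l1.*2.-1) ->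
      q1 = q0.
    move=> q1 l1 k1 Hl1 ->; case=> [[->]|[_ [Hp Hk1]]] //.
    by move: Hl1 Hp Hk1; clear; lia.
  have Eq1 := Hs _ _ _ Hl E H; have Eq2 := Hs _ _ _ Hl' E' H'.
  by split; [rewrite Eq1 Eq2|rewrite E E' Eq1 Eq2].
case: Eqk => Eq Ek; subst q' k'.
suff -> : l = l' by [].
case: H => [[Eq [Hl0 Ek]]|[Hne [Hl0 Ek]]];
case: H' => [[Eq' [Hl0' Ek']]|[Hne' [Hl0' Ek']]].
- by move: Ek Ek'; clear; lia.
- case: Hne' => [/eqP//|Hlt]. by move: Ek Ek' Hl0 Hlt Hl0'; clear; lia.
- case: Hne => [/eqP//|Hlt]. by move: Ek Ek' Hl0' Hlt Hl0; clear; lia.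
- by move: Ek Ek' Hl0 Hl0'; clear; lia.
Qed.

Section PathMatching.
Variables (mt0 : nat -> nat -> Prop) (q0 : seq nat) (l0 v0 : nat).
Hypothesis q0_in : q0 \in P.
Hypothesis mt0_adj : forall u d, mt0 u d -> a u d /\ u \in X.
Hypothesis mt0_fun : forall u d d', mt0 u d -> mt0 u d' -> d = d'.
Hypothesis mt0_inj : forall u u' d, mt0 u d -> mt0 u' d -> u = u'.
Hypothesis mt0_not_ce : ~ mt0 c e.
Hypothesis c_unmatched : 0 < l0 -> forall d, ~ mt0 c d.
Hypothesis e_unmatched : size q0 < l0.*2 -> forall u, ~ mt0 u e.
Hypothesis mt0_total : forall u, u \in X -> u != v0 -> (u != c \/ l0 = 0) -> exists d, mt0 u d.
Hypothesis v0_on_path : forall l, 0 < l -> l.*2 <= size q0 -> l = l0 -> nth 0 (route c e q0) l.*2 = v0.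

Lemma matching_disjoint_left u d d' : mt0 u d -> path_matching q0 l0 u d' -> False.
Proof.
move=> Hm /path_matchingE [q [l [k [Hq Hl Hu Hd [Hk0 Hk H]]]]].
have [HuV _] := adj_in A_crit (proj1 (mt0_adj Hm)).
case: (route_vertex Hq (leqW Hl)) => [[El Ec]|[_ Hin]|[El _]].
- have El0 : l = 0 by move: El; clear; lia.
  subst l; case: H => [[_ [Hl0 _]]|[_ [//]]].
  by apply: (c_unmatched Hl0 (d := d)); rewrite -Ec -Hu.
- by move: (P_fresh Hin); rewrite -Hu HuV.
- by move: Hl El; clear; lia.
Qed.

Lemma matching_disjoint_right u u' d : mt0 u d -> path_matching q0 l0 u' d -> False.
Proof.
move=> Hm /path_matchingE [q [l [k [Hq Hl Hu Hd [Hk0 Hk H]]]]].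
have [_ HdV] := adj_in A_crit (proj1 (mt0_adj Hm)).
case: (route_vertex Hq Hk) => [[Ek _]|[_ Hin]|[Ek Ee]].
- by move: Hk0; rewrite Ek.
- by move: (P_fresh Hin); rewrite -Hd HdV.
- case: H => [[Eq [Hll0 Ek']]|[_ [_ Ek']]].
    subst q; apply: (e_unmatched _ (u := u)); last by rewrite -Ee -Hd.
    have Hs : size q0 = l.*2 by apply/eqP; rewrite -eqSS -Ek Ek'.
    by rewrite Hs ltn_double.
  have Hs : (size q).+1 = l.*2.-1 by rewrite -Ek Ek'.
  move: Hl; rewrite leqNgt; move/negP; apply; rewrite -ltnS Hs.
  by case: (l.*2) Hs => //= n; rewrite ltnSn.
Qed.

Lemma extended_matching_total u : u \in X' -> u != v0 ->
  exists d, mt0 u d \/ path_matching q0 l0 u d.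
Proof.
move=> HuX' Huv0.
case: (proj1 (V'_def u) (X'_sub HuX')) => [HuV|HuC].
  have HuX := old_X HuV HuX'.
  case: (eqVneq u c) => [Euc|Huc].
    case: (posnP l0) => [El0|Hl0].
      by have [d Hd] := mt0_total HuX Huv0 (or_intror El0); exists d; left.
    exists (nth 0 (route c e q0) 1); right; exists q0, 0; split=> //.
    by left.
  by have [d Hd] := mt0_total HuX Huv0 (or_introl Huc); exists d; left.
have [q [i [Hq Hi Eu]]] := new_pos HuC.
have Hodd : odd i by rewrite -(path_class Hq Hi) -Eu.
set l := (i.+1)./2.
have El : l.*2 = i.+1.
  by rewrite -[RHS](odd_double_half i.+1) /= Hodd.
have Hl : l.*2 <= size q by rewrite El.
have Hl0' : 0 < l by move: El; clear; lia.
have Eu' : u = nth 0 (route c e q) l.*2 by rewrite El route_nth.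
case: (eqVneq q q0) => [Eq|Hne].
  case: (ltngtP l l0) => [Hlt|Hgt|Heq].
  - exists (nth 0 (route c e q) l.*2.+1); right; exists q, l; split=> //.
    by left.
  - exists (nth 0 (route c e q) l.*2.-1); right; exists q, l; split=> //.
    by right; split=> //; right.
  - exfalso; move: Huv0; rewrite Eu' Eq v0_on_path ?eqxx //.
    by rewrite -Eq.
exists (nth 0 (route c e q) l.*2.-1); right; exists q, l; split=> //.
by right; split=> //; left.
Qed.

Lemma extended_matching :
  near_perfect_matching a' X' v0 (fun u d => mt0 u d \/ path_matching q0 l0 u d).
Proof.
split.
- move=> u d [H|H].
    have [Ha HuX] := mt0_adj H; split; last exact: X_sub.
    apply/a'_def; left; split=> //; case=> [[E1 E2]|[E1 E2]].
      by subst; apply: mt0_not_ce.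
    by move: HuX; rewrite E1 (negbTE eX).
  exact: path_matching_adj H.
- move=> u d d' [H|H] [H'|H'].
  + exact: mt0_fun H H'.
  + by case: (matching_disjoint_left H H').
  + by case: (matching_disjoint_left H' H).
  + exact: path_matching_fun H H'.
- move=> u u' d [H|H] [H'|H'].
  + exact: mt0_inj H H'.
  + by case: (matching_disjoint_right H H').
  + by case: (matching_disjoint_right H' H).
  + exact: path_matching_inj H H'.
exact: extended_matching_total.
Qed.
End PathMatching.

Lemma ltn_half_double n : n < (n./2).+1.*2.
Proof.
rewrite doubleS -{1}(odd_double_half n); case: (odd n) => /=; lia.
Qed.

(* If the matching of A uses the replaced edge [c e], it is rerouted along a
   new path. *)
Lemma rep_near_perfect_old v0 : v0 \in V -> v0 \in X' ->
  exists mt, near_perfect_matching a' X' v0 mt.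
Proof.
move=> Hv0V Hv0; have [q0 Hq0] := P_nonempty.
have Hv0X := old_X Hv0V Hv0.
have [mt [M1 M2 M3 M4]] := near_perfect A_crit Hv0X.
case: (classic (mt c e)) => Hmce.
  exists (fun u d => (mt u d /\ u != c) \/ path_matching q0 (size q0)./2.+1 u d).
  apply: (extended_matching (mt0 := fun u d => mt u d /\ u != c)) => //.
  - by move=> u d [/M1].
  - by move=> u d d' [H _] [H' _]; apply: M2 H H'.
  - by move=> u u' d [H _] [H' _]; apply: M3 H H'.
  - by move=> [_]; rewrite eqxx.
  - by move=> _ d [_]; rewrite eqxx.
  - move=> _ u [H Huc]; have := M3 _ _ _ H Hmce; move=> E; by move: Huc; rewrite E eqxx.
  - move=> u HuX Huv [Huc|//].
    by have [d Hd] := M4 u HuX Huv; exists d.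
  - move=> l _ Hl El; subst l; have := ltn_half_double (size q0).
    by rewrite ltnNge Hl.
exists (fun u d => mt u d \/ path_matching q0 0 u d).
apply: (extended_matching (mt0 := mt)) => //.
- move=> u HuX Huv _; exact: M4.
- by move=> l Hl _ El; move: Hl; rewrite El.
Qed.

(* Start from a matching of A missing [c] and match along the route through
   [v0] up to [v0]. *)
Lemma rep_near_perfect_new v0 : v0 \in flatten P -> v0 \in X' ->
  exists mt, near_perfect_matching a' X' v0 mt.
Proof.
move=> Hv0C Hv0.
have [q [i [Hq Hi Ev0]]] := new_pos Hv0C.
have Hodd : odd i by rewrite -(path_class Hq Hi) -Ev0.
have [mt [M1 M2 M3 M4]] := near_perfect A_crit cX.
set l0 := (i.+1)./2.
have El : l0.*2 = i.+1.
  by rewrite -[RHS](odd_double_half i.+1) /= Hodd.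
exists (fun u d => (mt u d /\ u != c) \/ path_matching q l0 u d).
apply: (extended_matching (mt0 := fun u d => mt u d /\ u != c)) => //.
- by move=> u d [/M1].
- by move=> u d d' [H _] [H' _]; apply: M2 H H'.
- by move=> u u' d [H _] [H' _]; apply: M3 H H'.
- by move=> [_]; rewrite eqxx.
- by move=> _ d [_]; rewrite eqxx.
- by move=> Hlt; move: Hlt; rewrite El ltnNge Hi.
- move=> u HuX Huv [Huc|El0].
    by have [d Hd] := M4 u HuX Huc; exists d.
  by move: El; rewrite El0.
- by move=> l _ _ ->; rewrite El route_nth.
Qed.

Lemma rep_near_perfect v0 : v0 \in X' -> exists mt, near_perfect_matching a' X' v0 mt.
Proof.
move=> Hv0; case: (proj1 (V'_def v0) (X'_sub Hv0)) => Hv0P.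
  exact: rep_near_perfect_old.
exact: rep_near_perfect_new.
Qed.

Lemma replacement_critical : critical_bipartite V' a' X'.
Proof.
split.
- exact: a'_sym.
- exact: a'_in.
- by move=> u v /a'_bip uv; apply/idP/idP => /uv.
- exact: rep_nonisolated.
- exact: rep_staller_wins.
- exact: rep_near_perfect.
Qed.

End Replacement.

Lemma replacement_adj_rev (a a' : nat -> nat -> Prop) x y (P : seq (seq nat)) u v :
  (a' u v <-> (a u v /\ ~ ((u = x /\ v = y) \/ (u = y /\ v = x))) \/
     exists q, q \in P /\
       (consec (x :: q ++ [:: y]) u v \/ consec (x :: q ++ [:: y]) v u)) ->
  (a' u v <-> (a u v /\ ~ ((u = y /\ v = x) \/ (u = x /\ v = y))) \/
     exists q, q \in map rev P /\
       (consec (y :: q ++ [:: x]) u v \/ consec (y :: q ++ [:: x]) v u)).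
Proof.
move=> ->; split.
  case=> [[uv not_xy]|[q [Hq H]]]; first by left; split=> //; tauto.
  right; exists (rev q); split; first exact: map_f.
  by rewrite -rev_path !consec_rev; tauto.
case=> [[uv not_yx]|[q [/mapP [q0 Hq0 ->] H]]]; first by left; split=> //; tauto.
right; exists q0; split=> //.
by move: H; rewrite -rev_path !consec_rev; tauto.
Qed.

Lemma inA_critical V a X : inA V a X -> critical_bipartite V a X.
Proof.
elim=> {V a X} [U t m V a X|V a X x y P V' a' X' _ A_crit xy P_size P_even P_uniq P_fresh _
    V'_def a'_def X_sub X'_sub a'_bip]; first exact: subdivision_critical.
case: (boolP (x \in X)) => xX.
  exact: (replacement_critical A_crit xy xX P_size P_even P_uniq P_fresh V'_def a'_def
    X_sub X'_sub a'_bip).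
have yX : y \in X by move: (adj_bipartite A_crit xy); rewrite (negbTE xX) => /esym/negbFE.
apply: (replacement_critical (c := y) (e := x) (P := map rev P) A_crit) => //.
- exact: (adj_sym A_crit xy).
- by rewrite size_map.
- by move=> q /mapP [q0 Hq0 ->]; rewrite size_rev; apply: P_even.
- by rewrite uniq_flatten_rev.
- by move=> v; rewrite mem_flatten_rev; apply: P_fresh.
- by move=> v; rewrite mem_flatten_rev; apply: V'_def.
- by move=> u v; apply: replacement_adj_rev.
Qed.

Theorem theorem6p2 (V : seq nat) (a : nat -> nat -> Prop) (X : seq nat) :
  inA V a X -> atomic_MBD_critical V a [seq v <- V | v \notin X].
Proof.
move=> /inA_critical crit; split; first split.
- exact: staller_wins_critical crit.
- move=> v vV; rewrite mem_filter vV andbT negbK => vX.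
  have [mt mtP] := near_perfect crit vX.
  exact: near_perfect_matching_dominator_wins crit mtP.
- move=> u v; rewrite !mem_filter => /andP [uX _] /andP [vX _] uv.
  by move: (adj_bipartite crit uv); rewrite (negbTE uX) vX.
- by move=> u; rewrite mem_filter => /andP [uX uV]; exact: predominated_nonisolated crit u uV uX.
Qed.
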